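(* There exist smooth real hypersurfaces $M$ in $\mathbb{C}^4$ with $0\in M$ for which $\Delta_2(M,0)<\operatorname{gen.val}_{S\in G^3_0}\Delta_1(M\cap S,0)$. For instance, for $M=\{\operatorname{Re}(z_4)+|z_1^3-z_3z_2|^2+|z_2|^4=0\}$ one has $\Delta_2(M,0)=6$ while the generic value of $\Delta_1(M\cap S,0)$ over $S\in G^3_0$ is $8$.
   Context: For the germ $(M,p)$ of a smooth real hypersurface in $\mathbb{C}^n$, let $r_p$ be a generator of the ideal of germs at $p$ of smooth functions vanishing on $M$. $\Gamma_p$ is the set of non-constant germs of holomorphic maps $z\colon(\mathbb{C},0)\to(\mathbb{C}^n,p)$, $v(z)$ the order of vanishing of $z-p$ at $0$ and $v(r_p\circ z)$ the order of vanishing at $0$ of the smooth function $r_p\circ z$. D'Angelo's 1-type is $\Delta_1(M,p)=\sup_{z\in\Gamma_p}\frac{v(r_p\circ z)}{v(z)}$. For $q\in\{1,\dots,n\}$, let $G^{n-q+1}_p$ be the set of $(n-q+1)$-dimensional complex affine subspaces of $\mathbb{C}^n$ through $p$; $\Delta_q(M,p)=\inf_{S\in G^{n-q+1}_p}\Delta_1(M\cap S,p)$, where $M\cap S$ is regarded as a germ of real hypersurface in $S\cong\mathbb{C}^{n-q+1}$. The generic value over $S\in G^{n-q+1}_p$ of a quantity is the value it takes for all $S$ in some non-empty Zariski open subset of $G^{n-q+1}_p$. *)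

From Stdlib Require Import Reals List.
Open Scope R_scope.

Definition C : Type := (R * R)%type.
Definition C0 : C := (0, 0).
Definition Cadd (x y : C) : C := (fst x + fst y, snd x + snd y).
Definition Copp (x : C) : C := (- fst x, - snd x).
Definition Csub (x y : C) : C := Cadd x (Copp y).
Definition Cmul (x y : C) : C :=
  (fst x * fst y - snd x * snd y, fst x * snd y + snd x * fst y).
Fixpoint Cpow (x : C) (n : nat) : C :=
  match n with O => (1, 0) | S n' => Cmul x (Cpow x n') end.
Definition Cnorm2 (x : C) : R := fst x ^ 2 + snd x ^ 2.
Definition Cnorm (x : C) : R := sqrt (Cnorm2 x).

Record C4 : Type := mkC4 { c1 : C; c2 : C; c3 : C; c4 : C }.
Definition C4zero : C4 := mkC4 C0 C0 C0 C0.
Definition C4norm (v : C4) : R :=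
  Cnorm (c1 v) + Cnorm (c2 v) + Cnorm (c3 v) + Cnorm (c4 v).

Definition lin (a v : C4) : C :=
  Cadd (Cadd (Cmul (c1 a) (c1 v)) (Cmul (c2 a) (c2 v)))
       (Cadd (Cmul (c3 a) (c3 v)) (Cmul (c4 a) (c4 v))).

Definition C_differentiable_at (f : C -> C) (t : C) : Prop :=
  exists d : C, forall eps, 0 < eps -> exists delta, 0 < delta /\
    forall h, Cnorm h < delta ->
      Cnorm (Csub (Csub (f (Cadd t h)) (f t)) (Cmul d h)) <= eps * Cnorm h.

Definition holomorphic_near0 (z : C -> C4) : Prop :=
  exists rho, 0 < rho /\ forall t, Cnorm t < rho ->
    C_differentiable_at (fun s => c1 (z s)) t /\
    C_differentiable_at (fun s => c2 (z s)) t /\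
    C_differentiable_at (fun s => c3 (z s)) t /\
    C_differentiable_at (fun s => c4 (z s)) t.

Definition Gamma0 (z : C -> C4) : Prop :=
  holomorphic_near0 z /\ z C0 = C4zero /\
  ~ (exists delta, 0 < delta /\ forall t, Cnorm t < delta -> z t = C4zero).

(** * Order of vanishing at 0.
    [ord_ge f k] : f(t) = O(|t|^k) as t -> 0; for a smooth (resp. holomorphic)
    function this holds iff its order of vanishing at 0 is >= k. *)
Definition ord_ge (f : C -> R) (k : nat) : Prop :=
  exists K delta, 0 < delta /\
    forall t, Cnorm t < delta -> Rabs (f t) <= K * Cnorm t ^ k.

Definition vz_eq (z : C -> C4) (m : nat) : Prop :=
  ord_ge (fun t => C4norm (z t)) m /\ ~ ord_ge (fun t => C4norm (z t)) (S m).

(** * D'Angelo 1-type, restricted to germs of curves satisfying [inS].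
    Delta1 = sup { v(r o z) / v(z) } ; we state "sup >= a" and "sup <= a". *)
Definition Delta1_ge (r : C4 -> R) (inS : (C -> C4) -> Prop) (a : R) : Prop :=
  forall eps, 0 < eps -> exists (z : C -> C4) (m k : nat),
    Gamma0 z /\ inS z /\ vz_eq z m /\ ord_ge (fun t => r (z t)) k /\
    INR k / INR m > a - eps.

Definition Delta1_le (r : C4 -> R) (inS : (C -> C4) -> Prop) (a : R) : Prop :=
  forall (z : C -> C4) (m k : nat),
    Gamma0 z -> inS z -> vz_eq z m -> ord_ge (fun t => r (z t)) k ->
    INR k <= a * INR m.

Definition Delta1_eq r inS a : Prop := Delta1_ge r inS a /\ Delta1_le r inS a.

(** A germ lies in the complex hyperplane S_a = ker (lin a) (a <> 0).
    Hyperplanes through 0 are exactly the elements of G^3_0 in C^4. *)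
Definition in_hyp (a : C4) (z : C -> C4) : Prop :=
  exists delta, 0 < delta /\ forall t, Cnorm t < delta -> lin a (z t) = C0.

(** Delta_2(M,0) = inf_{S in G^3_0} Delta_1(M cap S, 0) = a *)
Definition Delta2_eq (r : C4 -> R) (a : R) : Prop :=
  (forall h : C4, h <> C4zero -> Delta1_ge r (in_hyp h) a) /\
  (forall eps, 0 < eps -> exists h : C4, h <> C4zero /\
      Delta1_le r (in_hyp h) (a + eps)).

Definition poly4 : Type := list (C * (nat * nat * nat * nat)).
Definition mono_eval (e : nat * nat * nat * nat) (v : C4) : C :=
  match e with (e1, e2, e3, e4) =>
    Cmul (Cmul (Cpow (c1 v) e1) (Cpow (c2 v) e2))
         (Cmul (Cpow (c3 v) e3) (Cpow (c4 v) e4)) end.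
Definition poly4_eval (P : poly4) (v : C4) : C :=
  fold_right (fun m acc => Cadd (Cmul (fst m) (mono_eval (snd m) v)) acc) C0 P.

(** Generic value of Delta_1(M cap S,0) over S in G^3_0 is a:
    it equals a for all S_h with h in a nonempty Zariski open set {P <> 0}. *)
Definition generic_Delta1_eq (r : C4 -> R) (a : R) : Prop :=
  exists P : poly4, (exists v, poly4_eval P v <> C0) /\
    forall h : C4, h <> C4zero -> poly4_eval P h <> C0 ->
      Delta1_eq r (in_hyp h) a.

Definition r_ex (v : C4) : R :=
  fst (c4 v) + Cnorm2 (Csub (Cpow (c1 v) 3) (Cmul (c3 v) (c2 v)))
  + (Cnorm2 (c2 v)) ^ 2.

(* Lower bounds: every hyperplane through 0 contains a line on which only [|z1^3|^2] survives
   in [r], so [r] vanishes to order 6 there; when [h1 h3 <> 0] the curve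
   [t |-> (h1 h3 t, - h1 h3^3 t^2, - h1^2 t + h2 h1 h3^2 t^2, 0)] lies in [S_h] and kills the
   [t^3] terms of [z1^3 - z3 z2], so [r] vanishes to order 8.
   Upper bounds: by Goursat's lemma and Cauchy's formula, each component of a holomorphic curve
   either vanishes to high order or has a leading monomial [c t^j].  As
   [p = |z1^3 - z3 z2|^2 + |z2|^4 >= 0] while [Re (c t^j)] changes sign, contact of order [k]
   forces [z4 = O(t^k)] and [p] to vanish to order [k].  On [{z3 = 0}] one of [z1, z2] has
   order [<= v(z)], so [p] has order [<= 6 v(z)].  On [S_h] with [h3 <> 0], [z3] is a
   combination of [z1, z2, z4]: either [ord z2 <= 2 v(z)] and [p] has order [<= 8 v(z)], or
   [ord z1 <= v(z)], [z3 z2] is negligible against [z1^3] and [p] has order [<= 6 v(z)]. *)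

From Pilot Require Import Defs.
From Stdlib Require Import Reals Lra Lia Psatz.
From Coquelicot Require Import Coquelicot.
Open Scope R_scope.

Lemma Cmod_fst (z : C) : Rabs (fst z) <= Cmod z.
Proof. pose proof (Rmax_Cmod z). pose proof (Rmax_l (Rabs (fst z)) (Rabs (snd z))). lra. Qed.

Lemma Cmod_snd (z : C) : Rabs (snd z) <= Cmod z.
Proof. pose proof (Rmax_Cmod z). pose proof (Rmax_r (Rabs (fst z)) (Rabs (snd z))). lra. Qed.

Lemma Cmod_le_abs_sum (z : C) : Cmod z <= Rabs (fst z) + Rabs (snd z).
Proof.
  destruct z as [x y]. unfold Cmod; simpl.
  pose proof (Rabs_pos x). pose proof (Rabs_pos y).
  apply Rsqr_incr_0_var; [|lra].
  rewrite Rsqr_sqrt by nra.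
  replace (x * (x * 1) + y * (y * 1)) with (Rsqr x + Rsqr y) by (unfold Rsqr; ring).
  rewrite (Rsqr_abs x), (Rsqr_abs y). unfold Rsqr. nra.
Qed.

Lemma Cmod_sub_sym a b : Cmod (Cminus a b) = Cmod (Cminus b a).
Proof. rewrite <- Cmod_opp. f_equal. ring. Qed.

Lemma Cmod_triangle3 x y z : Cmod (x + y + z)%C <= Cmod x + Cmod y + Cmod z.
Proof. eapply Rle_trans. apply Cmod_triangle. pose proof (Cmod_triangle x y). lra. Qed.

Lemma Cmod_minus_le x y : Cmod (Cminus x y) <= Cmod x + Cmod y.
Proof. unfold Cminus. eapply Rle_trans. apply Cmod_triangle. rewrite Cmod_opp. lra. Qed.

Lemma Cmult_near (a b : C) eps : 0 < eps -> exists e, 0 < e /\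
  forall x y, Cmod (Cminus x a) < e -> Cmod (Cminus y b) < e ->
    Cmod (Cminus (Cmult x y) (Cmult a b)) < eps.
Proof.
  intros Heps. set (A := Cmod a). set (B := Cmod b).
  assert (HA : 0 <= A) by apply Cmod_ge_0. assert (HB : 0 <= B) by apply Cmod_ge_0.
  exists (Rmin 1 (eps / (A + B + 2))). split.
  { apply Rmin_pos; [lra|]. apply Rdiv_lt_0_compat; lra. }
  intros x y Hx Hy.
  pose proof (Rmin_l 1 (eps / (A + B + 2))). pose proof (Rmin_r 1 (eps / (A + B + 2))).
  set (e := Rmin 1 (eps / (A + B + 2))) in *.
  assert (He : e * (A + B + 2) <= eps) by (apply Rle_div_r; lra).
  replace (Cminus (Cmult x y) (Cmult a b)) with
    (Cplus (Cplus (Cmult (Cminus x a) (Cminus y b)) (Cmult (Cminus x a) b)) (Cmult a (Cminus y b))) by ring.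
  eapply Rle_lt_trans. apply Cmod_triangle3. rewrite !Cmod_mult. fold A B.
  pose proof (Cmod_ge_0 (Cminus x a)). pose proof (Cmod_ge_0 (Cminus y b)).
  assert (Cmod (Cminus x a) * Cmod (Cminus y b) <= e * e) by (apply Rmult_le_compat; lra).
  assert (Cmod (Cminus x a) * B <= e * B) by (apply Rmult_le_compat_r; lra).
  assert (A * Cmod (Cminus y b) <= A * e) by (apply Rmult_le_compat_l; lra).
  nra.
Qed.

(** * Continuity and differentiability *)

Definition Rcont (g : R -> C) (x : R) : Prop :=
  forall eps, 0 < eps -> exists delta, 0 < delta /\
    forall y, Rabs (y - x) < delta -> Cmod (Cminus (g y) (g x)) < eps.

Definition Rcont_on (g : R -> C) a b := forall x, Rmin a b <= x <= Rmax a b -> Rcont g x.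

Definition is_Rderiv (G : R -> C) (x : R) (v : C) : Prop :=
  forall eps, 0 < eps -> exists delta, 0 < delta /\
    forall h, Rabs h < delta ->
      Cmod (Cminus (Cminus (G (x + h)) (G x)) (Cmult (RtoC h) v)) <= eps * Rabs h.

Definition Ccont (f : C -> C) (z : C) : Prop :=
  forall eps, 0 < eps -> exists delta, 0 < delta /\
    forall y, Cmod (Cminus y z) < delta -> Cmod (Cminus (f y) (f z)) < eps.

Definition is_Cderiv (f : C -> C) (z d : C) : Prop :=
  forall eps, 0 < eps -> exists delta, 0 < delta /\
    forall h, Cmod h < delta ->
      Cmod (Cminus (Cminus (f (Cplus z h)) (f z)) (Cmult d h)) <= eps * Cmod h.

Lemma Rcont_on_sub g a b c d :
  Rcont_on g a b -> Rmin a b <= Rmin c d -> Rmax c d <= Rmax a b -> Rcont_on g c d.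
Proof. intros H H1 H2 x Hx. apply H. lra. Qed.

Lemma Rcont_const c x : Rcont (fun _ => c) x.
Proof.
  intros eps Heps. exists 1. split; [lra|]. intros y _.
  replace (Cminus c c) with (RtoC 0) by ring. rewrite Cmod_0. lra.
Qed.

Lemma Rcont_comp q g x : Ccont q (g x) -> Rcont g x -> Rcont (fun y => q (g y)) x.
Proof.
  intros Hq Hg eps Heps. destruct (Hq eps Heps) as [d1 [Hd1 H1]].
  destruct (Hg d1 Hd1) as [d2 [Hd2 H2]]. exists d2; split; auto.
Qed.

Lemma Rcont_mult g1 g2 x : Rcont g1 x -> Rcont g2 x -> Rcont (fun y => Cmult (g1 y) (g2 y)) x.
Proof.
  intros H1 H2 eps Heps. destruct (Cmult_near (g1 x) (g2 x) eps Heps) as [e [He Hm]].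
  destruct (H1 e He) as [d1 [Hd1 K1]]. destruct (H2 e He) as [d2 [Hd2 K2]].
  exists (Rmin d1 d2). split; [apply Rmin_pos; auto|].
  intros y Hy. pose proof (Rmin_l d1 d2). pose proof (Rmin_r d1 d2).
  apply Hm; [apply K1 | apply K2]; lra.
Qed.

Lemma Rcont_fst g x : Rcont g x -> continuous (fun y => fst (g y)) x.
Proof.
  intros H. apply continuity_pt_filterlim. intros eps Heps.
  destruct (H eps Heps) as [d [Hd Hy]]. exists d. split; auto.
  intros y [_ Hyx]. specialize (Hy y Hyx).
  pose proof (Cmod_fst (Cminus (g y) (g x))). simpl in *. unfold R_dist, Rminus. lra.
Qed.

Lemma Rcont_snd g x : Rcont g x -> continuous (fun y => snd (g y)) x.
Proof.
  intros H. apply continuity_pt_filterlim. intros eps Heps.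
  destruct (H eps Heps) as [d [Hd Hy]]. exists d. split; auto.
  intros y [_ Hyx]. specialize (Hy y Hyx).
  pose proof (Cmod_snd (Cminus (g y) (g x))). simpl in *. unfold R_dist, Rminus. lra.
Qed.

Lemma Rcont_of_is_Rderiv G x v : is_Rderiv G x v -> Rcont G x.
Proof.
  intros H eps Heps. destruct (H 1 ltac:(lra)) as [dl [Hdl Hh]].
  pose proof (Cmod_ge_0 v).
  exists (Rmin dl (eps / (Cmod v + 2))). split.
  { apply Rmin_pos; auto. apply Rdiv_lt_0_compat; lra. }
  intros y Hy. pose proof (Rmin_l dl (eps / (Cmod v + 2))). pose proof (Rmin_r dl (eps / (Cmod v + 2))).
  specialize (Hh (y - x) ltac:(lra)). replace (x + (y - x)) with y in Hh by ring.
  replace (Cminus (G y) (G x)) with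
    (Cplus (Cminus (Cminus (G y) (G x)) (Cmult (RtoC (y - x)) v)) (Cmult (RtoC (y - x)) v)) by ring.
  eapply Rle_lt_trans. apply Cmod_triangle. rewrite Cmod_mult, Cmod_R.
  assert (Rabs (y - x) * (Cmod v + 2) < eps) by (apply Rlt_div_r; lra).
  pose proof (Rabs_pos (y - x)). nra.
Qed.

Lemma Ccont_of_is_Cderiv f z d : is_Cderiv f z d -> Ccont f z.
Proof.
  intros H eps Heps. destruct (H 1 ltac:(lra)) as [dl [Hdl Hh]].
  pose proof (Cmod_ge_0 d).
  exists (Rmin dl (eps / (Cmod d + 2))). split.
  { apply Rmin_pos; auto. apply Rdiv_lt_0_compat; lra. }
  intros y Hy. pose proof (Rmin_l dl (eps / (Cmod d + 2))). pose proof (Rmin_r dl (eps / (Cmod d + 2))).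
  specialize (Hh (Cminus y z) ltac:(lra)). replace (Cplus z (Cminus y z)) with y in Hh by ring.
  replace (Cminus (f y) (f z)) with
    (Cplus (Cminus (Cminus (f y) (f z)) (Cmult d (Cminus y z))) (Cmult d (Cminus y z))) by ring.
  eapply Rle_lt_trans. apply Cmod_triangle. rewrite Cmod_mult.
  assert (Cmod (Cminus y z) * (Cmod d + 2) < eps) by (apply Rlt_div_r; lra).
  pose proof (Cmod_ge_0 (Cminus y z)). nra.
Qed.

Lemma Ccont_ext f g z : (forall x, f x = g x) -> Ccont g z -> Ccont f z.
Proof. intros E H eps Heps. destruct (H eps Heps) as [d [Hd K]]. exists d; split; auto. intros y Hy. rewrite !E. auto. Qed.

Lemma Ccont_const c z : Ccont (fun _ => c) z.
Proof.
  intros eps Heps. exists 1. split; [lra|]. intros y _.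
  replace (Cminus c c) with (RtoC 0) by ring. rewrite Cmod_0. lra.
Qed.

Lemma Ccont_id z : Ccont (fun x => x) z.
Proof. intros eps Heps. exists eps. split; auto. Qed.

Lemma Ccont_plus f g z : Ccont f z -> Ccont g z -> Ccont (fun x => Cplus (f x) (g x)) z.
Proof.
  intros Hf Hg eps Heps. destruct (Hf (eps/2) ltac:(lra)) as [d1 [Hd1 K1]].
  destruct (Hg (eps/2) ltac:(lra)) as [d2 [Hd2 K2]].
  exists (Rmin d1 d2). split. apply Rmin_pos; auto.
  intros y Hy. pose proof (Rmin_l d1 d2). pose proof (Rmin_r d1 d2).
  specialize (K1 y ltac:(lra)). specialize (K2 y ltac:(lra)).
  replace (Cminus (Cplus (f y) (g y)) (Cplus (f z) (g z))) with
    (Cplus (Cminus (f y) (f z)) (Cminus (g y) (g z))) by ring.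
  eapply Rle_lt_trans. apply Cmod_triangle. lra.
Qed.

Lemma Ccont_mult f g z : Ccont f z -> Ccont g z -> Ccont (fun x => Cmult (f x) (g x)) z.
Proof.
  intros Hf Hg eps Heps. destruct (Cmult_near (f z) (g z) eps Heps) as [e [He Hm]].
  destruct (Hf e He) as [d1 [Hd1 K1]]. destruct (Hg e He) as [d2 [Hd2 K2]].
  exists (Rmin d1 d2). split; [apply Rmin_pos; auto|].
  intros y Hy. pose proof (Rmin_l d1 d2). pose proof (Rmin_r d1 d2).
  apply Hm; [apply K1 | apply K2]; lra.
Qed.

Lemma Ccont_cmul c f z : Ccont f z -> Ccont (fun x => Cmult c (f x)) z.
Proof. intros H. apply Ccont_mult; auto using Ccont_const. Qed.

Lemma Ccont_pow f z n : Ccont f z -> Ccont (fun x => Cpow (f x) n) z.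
Proof. intros H. induction n; simpl; auto using Ccont_const, Ccont_mult. Qed.

Lemma is_Cderiv_ext_d f z d d' : d = d' -> is_Cderiv f z d -> is_Cderiv f z d'.
Proof. intros E; subst; auto. Qed.

Lemma is_Cderiv_local f g z d :
  (exists del, 0 < del /\ forall y, Cmod (Cminus y z) < del -> f y = g y) ->
  is_Cderiv g z d -> is_Cderiv f z d.
Proof.
  intros [del [Hdel Hfg]] Hg eps Heps. destruct (Hg eps Heps) as [d1 [Hd1 K]].
  exists (Rmin d1 del). split. apply Rmin_pos; auto.
  intros h Hh. pose proof (Rmin_l d1 del). pose proof (Rmin_r d1 del).
  rewrite (Hfg (Cplus z h)), (Hfg z).
  - apply K. lra.
  - replace (Cminus z z) with (RtoC 0) by ring. rewrite Cmod_0. lra.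
  - replace (Cminus (Cplus z h) z) with h by ring. lra.
Qed.

Lemma is_Cderiv_const c z : is_Cderiv (fun _ => c) z (RtoC 0).
Proof.
  intros eps Heps. exists 1. split; [lra|]. intros h _.
  replace (Cminus (Cminus c c) (Cmult (RtoC 0) h)) with (RtoC 0) by ring. rewrite Cmod_0.
  pose proof (Cmod_ge_0 h). nra.
Qed.

Lemma is_Cderiv_id z : is_Cderiv (fun x => x) z (RtoC 1).
Proof.
  intros eps Heps. exists 1. split; [lra|]. intros h _.
  replace (Cminus (Cminus (Cplus z h) z) (Cmult (RtoC 1) h)) with (RtoC 0) by ring. rewrite Cmod_0.
  pose proof (Cmod_ge_0 h). nra.
Qed.

Lemma is_Cderiv_plus f g z df dg : is_Cderiv f z df -> is_Cderiv g z dg ->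
  is_Cderiv (fun x => Cplus (f x) (g x)) z (Cplus df dg).
Proof.
  intros Hf Hg eps Heps. destruct (Hf (eps/2) ltac:(lra)) as [d1 [Hd1 K1]].
  destruct (Hg (eps/2) ltac:(lra)) as [d2 [Hd2 K2]].
  exists (Rmin d1 d2). split. apply Rmin_pos; auto.
  intros h Hh. pose proof (Rmin_l d1 d2). pose proof (Rmin_r d1 d2).
  specialize (K1 h ltac:(lra)). specialize (K2 h ltac:(lra)).
  replace (Cminus (Cminus (Cplus (f (Cplus z h)) (g (Cplus z h))) (Cplus (f z) (g z))) (Cmult (Cplus df dg) h))
    with (Cplus (Cminus (Cminus (f (Cplus z h)) (f z)) (Cmult df h))
                (Cminus (Cminus (g (Cplus z h)) (g z)) (Cmult dg h))) by ring.
  eapply Rle_trans. apply Cmod_triangle. lra.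
Qed.

Lemma is_Cderiv_mult f g z df dg : is_Cderiv f z df -> is_Cderiv g z dg ->
  is_Cderiv (fun x => Cmult (f x) (g x)) z (Cplus (Cmult df (g z)) (Cmult (f z) dg)).
Proof.
  intros Hf Hg eps Heps.
  pose proof (Ccont_of_is_Cderiv g z dg Hg) as Gc.
  set (A := Cmod (f z)). set (B := Cmod (g z)). set (D := Cmod df).
  assert (HA : 0 <= A) by apply Cmod_ge_0. assert (HB : 0 <= B) by apply Cmod_ge_0.
  assert (HD : 0 <= D) by apply Cmod_ge_0.
  set (e := eps / (A + B + D + 3)).
  assert (He : 0 < e) by (apply Rdiv_lt_0_compat; lra).
  assert (He3 : e * (A + B + D + 3) = eps) by (unfold e; field; lra).
  destruct (Hf e He) as [d1 [Hd1 K1]]. destruct (Hg e He) as [d2 [Hd2 K2]].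
  destruct (Gc (Rmin 1 e) ltac:(apply Rmin_pos; lra)) as [d3 [Hd3 K3]].
  exists (Rmin d1 (Rmin d2 d3)). split. repeat apply Rmin_pos; auto.
  intros h Hh. pose proof (Rmin_l d1 (Rmin d2 d3)). pose proof (Rmin_r d1 (Rmin d2 d3)).
  pose proof (Rmin_l d2 d3). pose proof (Rmin_r d2 d3).
  specialize (K1 h ltac:(lra)). specialize (K2 h ltac:(lra)).
  specialize (K3 (Cplus z h) ltac:(replace (Cminus (Cplus z h) z) with h by ring; lra)).
  pose proof (Rmin_l 1 e). pose proof (Rmin_r 1 e).
  set (E1 := Cminus (Cminus (f (Cplus z h)) (f z)) (Cmult df h)) in *.
  set (E2 := Cminus (Cminus (g (Cplus z h)) (g z)) (Cmult dg h)) in *.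
  set (E3 := Cminus (g (Cplus z h)) (g z)) in *.
  replace (Cminus (Cminus (Cmult (f (Cplus z h)) (g (Cplus z h))) (Cmult (f z) (g z)))
                  (Cmult (Cplus (Cmult df (g z)) (Cmult (f z) dg)) h))
    with (Cplus (Cplus (Cmult E1 (Cplus (g z) E3)) (Cmult (Cmult df h) E3)) (Cmult (f z) E2))
    by (unfold E1, E2, E3; ring).
  eapply Rle_trans. apply Cmod_triangle3. rewrite !Cmod_mult.
  pose proof (Cmod_triangle (g z) E3) as HgE. fold B in HgE.
  pose proof (Cmod_ge_0 E1). pose proof (Cmod_ge_0 E2). pose proof (Cmod_ge_0 E3). pose proof (Cmod_ge_0 h).
  assert (Cmod E1 * Cmod (Cplus (g z) E3) <= e * Cmod h * (B + 1)).
  { apply Rmult_le_compat; auto. apply Cmod_ge_0. lra. }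
  assert (D * Cmod h * Cmod E3 <= D * Cmod h * e) by (apply Rmult_le_compat_l; nra).
  assert (A * Cmod E2 <= A * (e * Cmod h)) by (apply Rmult_le_compat_l; lra).
  fold D A. nra.
Qed.

Lemma is_Cderiv_cmul c f z d : is_Cderiv f z d -> is_Cderiv (fun x => Cmult c (f x)) z (Cmult c d).
Proof.
  intros H. eapply is_Cderiv_ext_d.
  2: apply (is_Cderiv_mult (fun _ => c) f z (RtoC 0) d (is_Cderiv_const c z) H). ring.
Qed.

Lemma is_Cderiv_pow f z df k : is_Cderiv f z df ->
  is_Cderiv (fun x => Cpow (f x) (S k)) z (Cmult (RtoC (INR (S k))) (Cmult (Cpow (f z) k) df)).
Proof.
  intros Hf. induction k.
  - eapply is_Cderiv_ext_d. 2: eapply is_Cderiv_local; [|exact Hf].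
    + simpl. ring.
    + exists 1. split; [lra|]. intros y _. simpl. ring.
  - eapply is_Cderiv_ext_d. 2: apply (is_Cderiv_mult f (fun x => Cpow (f x) (S k)) z df _ Hf IHk).
    rewrite !S_INR, !RtoC_plus. simpl. ring.
Qed.

Lemma is_Cderiv_inv_sub w z : z <> w ->
  is_Cderiv (fun x => Cinv (Cminus x w)) z (Copp (Cinv (Cmult (Cminus z w) (Cminus z w)))).
Proof.
  intros Hz eps Heps.
  set (u := Cminus z w).
  assert (Hu : u <> RtoC 0).
  { unfold u; intros E; apply Hz. transitivity (Cplus (Cminus z w) w); [ring|]. rewrite E. ring. }
  assert (Hum : 0 < Cmod u) by (apply Cmod_gt_0; auto).
  exists (Rmin (Cmod u / 2) (eps * (Cmod u ^ 3) / 2)). split.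
  { apply Rmin_pos. lra. apply Rdiv_lt_0_compat; [|lra]. apply Rmult_lt_0_compat; auto. apply pow_lt; auto. }
  intros h Hh.
  pose proof (Rmin_l (Cmod u / 2) (eps * (Cmod u ^ 3) / 2)).
  pose proof (Rmin_r (Cmod u / 2) (eps * (Cmod u ^ 3) / 2)).
  assert (Hlow : Cmod u / 2 <= Cmod (Cplus u h)).
  { pose proof (Cmod_triangle (Cplus u h) (Copp h)) as T.
    replace (Cplus (Cplus u h) (Copp h)) with u in T by ring. rewrite Cmod_opp in T. lra. }
  assert (Huh : Cplus u h <> RtoC 0) by (intros E; rewrite E, Cmod_0 in Hlow; lra).
  replace (Cminus (Cplus z h) w) with (Cplus u h) by (unfold u; ring). fold u.
  replace (Cminus (Cminus (Cinv (Cplus u h)) (Cinv u)) (Cmult (Copp (Cinv (Cmult u u))) h))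
    with (Cmult (Cmult h h) (Cinv (Cmult (Cmult u u) (Cplus u h)))) by (field; auto).
  rewrite Cmod_mult, Cmod_mult, Cmod_inv, !Cmod_mult by (repeat apply Cmult_neq_0; auto).
  pose proof (Cmod_ge_0 h).
  assert (Hp : 0 < Cmod u * Cmod u * Cmod (Cplus u h)) by (apply Rmult_lt_0_compat; [nra|lra]).
  apply (Rmult_le_reg_r (Cmod u * Cmod u * Cmod (Cplus u h))); auto.
  rewrite Rmult_assoc, Rinv_l, Rmult_1_r by lra.
  assert (eps * (Cmod u ^ 3 / 2) <= eps * (Cmod u * Cmod u * Cmod (Cplus u h))).
  { apply Rmult_le_compat_l. lra. simpl. nra. }
  nra.
Qed.

Lemma Ccont_inv_sub w z : z <> w -> Ccont (fun x => Cinv (Cminus x w)) z.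
Proof. intros H. eapply Ccont_of_is_Cderiv. apply is_Cderiv_inv_sub; auto. Qed.

Lemma Ccont_inv z : z <> RtoC 0 -> Ccont (fun x => Cinv x) z.
Proof.
  intros H. apply (Ccont_ext _ (fun x => Cinv (Cminus x (RtoC 0)))).
  - intros x. f_equal. ring.
  - apply Ccont_inv_sub; auto.
Qed.

Lemma is_Rderiv_comp F g x d v : is_Cderiv F (g x) d -> is_Rderiv g x v ->
  is_Rderiv (fun y => F (g y)) x (Cmult d v).
Proof.
  intros HF Hg eps Heps.
  pose proof (Cmod_ge_0 v) as Hv. pose proof (Cmod_ge_0 d) as Hd.
  set (e1 := eps / (2 * (Cmod v + 1))).
  assert (He1 : 0 < e1) by (apply Rdiv_lt_0_compat; lra).
  assert (He12 : e1 * (Cmod v + 1) = eps / 2) by (unfold e1; field; lra).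
  set (e2 := Rmin 1 (eps / (2 * (Cmod d + 1)))).
  assert (He2 : 0 < e2) by (apply Rmin_pos; [lra|]; apply Rdiv_lt_0_compat; lra).
  assert (He21 : e2 <= 1) by apply Rmin_l.
  assert (He22 : e2 * (Cmod d + 1) <= eps / 2).
  { apply Rle_div_r; [lra|]. unfold e2. rewrite Rdiv_mult_distr. apply Rmin_r. }
  destruct (HF e1 He1) as [d1 [Hd1 K1]]. destruct (Hg e2 He2) as [d2 [Hd2 K2]].
  exists (Rmin d2 (d1 / (Cmod v + 1))). split.
  { apply Rmin_pos; auto. apply Rdiv_lt_0_compat; lra. }
  intros h Hh. pose proof (Rmin_l d2 (d1 / (Cmod v + 1))). pose proof (Rmin_r d2 (d1 / (Cmod v + 1))).
  pose proof (Rabs_pos h).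
  specialize (K2 h ltac:(lra)).
  set (k := Cminus (g (x + h)) (g x)).
  assert (Hk : Cmod k <= (Cmod v + 1) * Rabs h).
  { replace k with (Cplus (Cminus (Cminus (g (x + h)) (g x)) (Cmult (RtoC h) v)) (Cmult (RtoC h) v))
      by (unfold k; ring).
    eapply Rle_trans. apply Cmod_triangle. rewrite Cmod_mult, Cmod_R. nra. }
  assert (Hk2 : Cmod k < d1).
  { assert (Rabs h * (Cmod v + 1) < d1) by (apply Rlt_div_r; lra). lra. }
  specialize (K1 k Hk2).
  replace (Cplus (g x) k) with (g (x + h)) in K1 by (unfold k; ring).
  replace (Cminus (Cminus (F (g (x + h))) (F (g x))) (Cmult (RtoC h) (Cmult d v))) with
    (Cplus (Cminus (Cminus (F (g (x + h))) (F (g x))) (Cmult d k))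
           (Cmult d (Cminus (Cminus (g (x + h)) (g x)) (Cmult (RtoC h) v)))) by (unfold k; ring).
  eapply Rle_trans. apply Cmod_triangle. rewrite Cmod_mult.
  assert (e1 * Cmod k <= eps / 2 * Rabs h) by (rewrite <- He12; nra).
  assert (Cmod d * Cmod (Cminus (Cminus (g (x + h)) (g x)) (Cmult (RtoC h) v)) <= eps / 2 * Rabs h).
  { apply Rle_trans with (Cmod d * (e2 * Rabs h)); [apply Rmult_le_compat_l; auto | nra]. }
  lra.
Qed.

Lemma is_Rderiv_of_components G x v :
  derivable_pt_lim (fun y => fst (G y)) x (fst v) ->
  derivable_pt_lim (fun y => snd (G y)) x (snd v) ->
  is_Rderiv G x v.
Proof.
  intros H1 H2 eps Heps.
  destruct (H1 (eps/2) ltac:(lra)) as [d1 K1]. destruct (H2 (eps/2) ltac:(lra)) as [d2 K2].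
  exists (Rmin d1 d2). split. apply Rmin_pos; apply cond_pos.
  intros h Hh. pose proof (Rmin_l d1 d2). pose proof (Rmin_r d1 d2).
  destruct (Req_dec h 0) as [E|Nh].
  { subst h. rewrite Rplus_0_r.
    replace (Cminus (Cminus (G x) (G x)) (Cmult (RtoC 0) v)) with (RtoC 0) by ring.
    rewrite Cmod_0, Rabs_R0. lra. }
  specialize (K1 h Nh ltac:(lra)). specialize (K2 h Nh ltac:(lra)).
  eapply Rle_trans. apply Cmod_le_abs_sum. simpl.
  pose proof (Rabs_pos h).
  replace (fst (G (x + h)) + - fst (G x) + - (h * fst v - 0 * snd v))
    with (((fst (G (x + h)) - fst (G x)) / h - fst v) * h) by (field; auto).
  replace (snd (G (x + h)) + - snd (G x) + - (h * snd v + 0 * fst v))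
    with (((snd (G (x + h)) - snd (G x)) / h - snd v) * h) by (field; auto).
  rewrite !Rabs_mult. nra.
Qed.

Lemma Rabs_div_lt a h e : h <> 0 -> Rabs a < e * Rabs h -> Rabs (a / h) < e.
Proof.
  intros Hh H. pose proof (Rabs_pos_lt h Hh).
  unfold Rdiv. rewrite Rabs_mult, Rabs_inv. apply Rlt_div_l; lra.
Qed.

Lemma is_Rderiv_fst G x v : is_Rderiv G x v -> derivable_pt_lim (fun y => fst (G y)) x (fst v).
Proof.
  intros H eps Heps. destruct (H (eps/2) ltac:(lra)) as [d [Hd Hh]].
  exists (mkposreal d Hd). intros h Hh0 Hhd. simpl in Hhd.
  specialize (Hh h Hhd).
  pose proof (Cmod_fst (Cminus (Cminus (G (x + h)) (G x)) (Cmult (RtoC h) v))) as F. simpl in F.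
  replace ((fst (G (x + h)) - fst (G x)) / h - fst v)
    with ((fst (G (x + h)) + - fst (G x) + - (h * fst v - 0 * snd v)) / h) by (field; auto).
  pose proof (Rabs_pos_lt h Hh0).
  apply Rabs_div_lt; [lra|]. nra.
Qed.

Lemma is_Rderiv_snd G x v : is_Rderiv G x v -> derivable_pt_lim (fun y => snd (G y)) x (snd v).
Proof.
  intros H eps Heps. destruct (H (eps/2) ltac:(lra)) as [d [Hd Hh]].
  exists (mkposreal d Hd). intros h Hh0 Hhd. simpl in Hhd.
  specialize (Hh h Hhd).
  pose proof (Cmod_snd (Cminus (Cminus (G (x + h)) (G x)) (Cmult (RtoC h) v))) as F. simpl in F.
  replace ((snd (G (x + h)) - snd (G x)) / h - snd v)
    with ((snd (G (x + h)) + - snd (G x) + - (h * snd v + 0 * fst v)) / h) by (field; auto).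
  pose proof (Rabs_pos_lt h Hh0).
  apply Rabs_div_lt; [lra|]. nra.
Qed.

(** * Integrals of complex-valued functions of a real variable *)

Definition CRInt (g : R -> C) (a b : R) : C :=
  (RInt (fun x => fst (g x)) a b, RInt (fun x => snd (g x)) a b).

Lemma ex_RInt_fst g a b : Rcont_on g a b -> ex_RInt (fun y => fst (g y)) a b.
Proof. intros H. apply (ex_RInt_continuous (V:=R_CompleteNormedModule)). intros z Hz. apply Rcont_fst, H, Hz. Qed.

Lemma ex_RInt_snd g a b : Rcont_on g a b -> ex_RInt (fun y => snd (g y)) a b.
Proof. intros H. apply (ex_RInt_continuous (V:=R_CompleteNormedModule)). intros z Hz. apply Rcont_snd, H, Hz. Qed.

Lemma CRInt_ext g1 g2 a b : (forall x, g1 x = g2 x) -> CRInt g1 a b = CRInt g2 a b.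
Proof. intros H. unfold CRInt. f_equal; apply RInt_ext; intros; rewrite H; auto. Qed.

Lemma CRInt_point g a : CRInt g a a = RtoC 0.
Proof. unfold CRInt. rewrite !RInt_point. reflexivity. Qed.

Lemma CRInt_const c a b : CRInt (fun _ => c) a b = Cmult (RtoC (b - a)) c.
Proof.
  unfold CRInt. rewrite !(RInt_const (V:=R_CompleteNormedModule)).
  unfold RtoC, Cmult; simpl. unfold scal; simpl. unfold mult; simpl. f_equal; ring.
Qed.

Lemma CRInt_plus g1 g2 a b : Rcont_on g1 a b -> Rcont_on g2 a b ->
  CRInt (fun x => Cplus (g1 x) (g2 x)) a b = Cplus (CRInt g1 a b) (CRInt g2 a b).
Proof.
  intros H1 H2. unfold CRInt. simpl.
  rewrite (RInt_plus (V:=R_CompleteNormedModule) (fun x => fst (g1 x)) (fun x => fst (g2 x)))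
    by (apply ex_RInt_fst; auto).
  rewrite (RInt_plus (V:=R_CompleteNormedModule) (fun x => snd (g1 x)) (fun x => snd (g2 x)))
    by (apply ex_RInt_snd; auto).
  reflexivity.
Qed.

Lemma CRInt_cmul c g a b : Rcont_on g a b ->
  CRInt (fun x => Cmult c (g x)) a b = Cmult c (CRInt g a b).
Proof.
  intros H. unfold CRInt, Cmult. simpl.
  pose proof (ex_RInt_fst g a b H) as [I1 E1]. pose proof (ex_RInt_snd g a b H) as [I2 E2].
  rewrite (is_RInt_unique _ _ _ I1 E1), (is_RInt_unique _ _ _ I2 E2).
  f_equal; apply is_RInt_unique.
  - exact (is_RInt_minus (V:=R_NormedModule) _ _ a b _ _
             (is_RInt_scal _ a b (fst c) _ E1) (is_RInt_scal _ a b (snd c) _ E2)).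
  - exact (is_RInt_plus (V:=R_NormedModule) _ _ a b _ _
             (is_RInt_scal _ a b (fst c) _ E2) (is_RInt_scal _ a b (snd c) _ E1)).
Qed.

Lemma CRInt_Chasles g a b c : Rcont_on g a b -> Rcont_on g b c ->
  Cplus (CRInt g a b) (CRInt g b c) = CRInt g a c.
Proof.
  intros H1 H2. unfold CRInt, Cplus; simpl. f_equal.
  - apply (RInt_Chasles (V:=R_CompleteNormedModule)); apply ex_RInt_fst; auto.
  - apply (RInt_Chasles (V:=R_CompleteNormedModule)); apply ex_RInt_snd; auto.
Qed.

Lemma CRInt_swap g a b : Rcont_on g a b -> CRInt g b a = Copp (CRInt g a b).
Proof.
  intros H. assert (H' : Rcont_on g b a) by (intros x Hx; apply H; rewrite Rmin_comm, Rmax_comm; auto).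
  pose proof (CRInt_Chasles g a b a H H') as E. rewrite CRInt_point in E.
  transitivity (Cminus (Cplus (CRInt g a b) (CRInt g b a)) (CRInt g a b)); [ring|]. rewrite E. ring.
Qed.

Lemma CRInt_comp_lin g (u v a b : R) : Rcont_on g (u * a + v) (u * b + v) ->
  CRInt (fun y => Cmult (RtoC u) (g (u * y + v))) a b = CRInt g (u * a + v) (u * b + v).
Proof.
  intros H. unfold CRInt. simpl. f_equal.
  - rewrite <- (RInt_comp_lin (V:=R_CompleteNormedModule) (fun x => fst (g x))) by (apply ex_RInt_fst; auto).
    apply RInt_ext. intros x _. unfold scal; simpl; unfold mult; simpl. ring.
  - rewrite <- (RInt_comp_lin (V:=R_CompleteNormedModule) (fun x => snd (g x))) by (apply ex_RInt_snd; auto).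
    apply RInt_ext. intros x _. unfold scal; simpl; unfold mult; simpl. ring.
Qed.

(* The factor 2 comes from estimating real and imaginary parts separately. *)
Lemma CRInt_bound g a b M : a <= b -> Rcont_on g a b ->
  (forall x, a <= x <= b -> Cmod (g x) <= M) ->
  Cmod (CRInt g a b) <= 2 * (b - a) * M.
Proof.
  intros Hab H HM. eapply Rle_trans. apply Cmod_le_abs_sum. unfold CRInt; simpl.
  assert (Rabs (RInt (fun x => fst (g x)) a b) <= (b - a) * M).
  { apply abs_RInt_le_const; auto. apply ex_RInt_fst; auto.
    intros t Ht. eapply Rle_trans; [apply Cmod_fst | auto]. }
  assert (Rabs (RInt (fun x => snd (g x)) a b) <= (b - a) * M).
  { apply abs_RInt_le_const; auto. apply ex_RInt_snd; auto.
    intros t Ht. eapply Rle_trans; [apply Cmod_snd | auto]. }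
  lra.
Qed.

Lemma CRInt_FTC G v a b : a <= b ->
  (forall x, a <= x <= b -> is_Rderiv G x (v x)) -> Rcont_on v a b ->
  CRInt v a b = Cminus (G b) (G a).
Proof.
  intros Hab HD HC. unfold CRInt, Cminus, Cplus, Copp. simpl.
  assert (Hmin : Rmin a b = a) by (apply Rmin_left; lra).
  assert (Hmax : Rmax a b = b) by (apply Rmax_right; lra).
  f_equal; apply is_RInt_unique.
  - apply (is_RInt_derive (V:=R_CompleteNormedModule) (fun y => fst (G y))).
    + intros x Hx. rewrite Hmin, Hmax in Hx. apply is_derive_Reals, is_Rderiv_fst, HD, Hx.
    + intros x Hx. apply Rcont_fst, HC, Hx.
  - apply (is_RInt_derive (V:=R_CompleteNormedModule) (fun y => snd (G y))).
    + intros x Hx. rewrite Hmin, Hmax in Hx. apply is_derive_Reals, is_Rderiv_snd, HD, Hx.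
    + intros x Hx. apply Rcont_snd, HC, Hx.
Qed.

(** * Integrals along segments and triangles *)

Definition line (a b : C) (s : R) : C := Cplus a (Cmult (RtoC s) (Cminus b a)).

Lemma line_0 a b : line a b 0 = a.
Proof. unfold line. ring. Qed.

Lemma line_1 a b : line a b 1 = b.
Proof. unfold line. ring. Qed.

Lemma is_Rderiv_line a b s : is_Rderiv (line a b) s (Cminus b a).
Proof.
  intros eps Heps. exists 1. split; [lra|]. intros h _.
  replace (Cminus (Cminus (line a b (s + h)) (line a b s)) (Cmult (RtoC h) (Cminus b a))) with (RtoC 0)
    by (unfold line; rewrite RtoC_plus; ring).
  rewrite Cmod_0. pose proof (Rabs_pos h). nra.
Qed.

Lemma Rcont_line a b s : Rcont (line a b) s.
Proof. eapply Rcont_of_is_Rderiv. apply is_Rderiv_line. Qed.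

Lemma disc_line a b s rho :
  Cmod a < rho -> Cmod b < rho -> 0 <= s <= 1 -> Cmod (line a b s) < rho.
Proof.
  intros Ha Hb Hs. unfold line.
  replace (Cplus a (Cmult (RtoC s) (Cminus b a))) with (Cplus (Cmult (RtoC (1 - s)) a) (Cmult (RtoC s) b))
    by (rewrite RtoC_minus; ring).
  eapply Rle_lt_trans. apply Cmod_triangle. rewrite !Cmod_mult, !Cmod_R, !Rabs_right by lra.
  destruct (Rle_dec s (1/2)).
  - assert (0 < (1 - s) * (rho - Cmod a)) by (apply Rmult_lt_0_compat; lra). nra.
  - assert (0 < s * (rho - Cmod b)) by (apply Rmult_lt_0_compat; lra). nra.
Qed.

Lemma disc_line_between a b t u s rho :
  Cmod (line a b t) < rho -> Cmod (line a b u) < rho -> Rmin t u <= s <= Rmax t u ->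
  Cmod (line a b s) < rho.
Proof.
  intros Ht Hu Hs. destruct (Req_dec t u) as [<-|Htu].
  - rewrite Rmin_left, Rmax_left in Hs by lra. replace s with t by lra. auto.
  - set (lam := (s - t) / (u - t)).
    assert (Hl : 0 <= lam <= 1).
    { unfold lam, Rmin, Rmax in *. destruct (Rle_dec t u).
      - split; [apply Rdiv_le_0_compat; lra|]. apply Rle_div_l; lra.
      - replace ((s - t) / (u - t)) with ((t - s) / (t - u)) by (field; lra).
        split; [apply Rdiv_le_0_compat; lra|]. apply Rle_div_l; lra. }
    replace (line a b s) with (line (line a b t) (line a b u) lam).
    + apply disc_line; auto.
    + unfold line. replace (RtoC s) with (RtoC (t + lam * (u - t))) by (f_equal; unfold lam; field; lra).
      rewrite RtoC_plus, RtoC_mult, RtoC_minus. ring.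
Qed.

Lemma Rcont_comp_affine g u v x : Rcont g (u * x + v) -> Rcont (fun y => g (u * y + v)) x.
Proof.
  intros H eps Heps. destruct (H eps Heps) as [d [Hd K]].
  pose proof (Rabs_pos u).
  exists (d / (Rabs u + 1)). split; [apply Rdiv_lt_0_compat; lra|].
  intros y Hy. apply K.
  replace (u * y + v - (u * x + v)) with (u * (y - x)) by ring. rewrite Rabs_mult.
  assert (Rabs (y - x) * (Rabs u + 1) < d) by (apply Rlt_div_r; lra).
  pose proof (Rabs_pos (y - x)). nra.
Qed.

Definition Ccont_seg (f : C -> C) a b := forall s, 0 <= s <= 1 -> Ccont f (line a b s).

Lemma Rcont_on_of_Ccont_seg f a b : Ccont_seg f a b -> Rcont_on (fun s => f (line a b s)) 0 1.
Proof.
  intros H x Hx. rewrite Rmin_left, Rmax_right in Hx by lra.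
  apply Rcont_comp; [apply H; auto | apply Rcont_line].
Qed.

Definition seg_int (f : C -> C) (a b : C) : C :=
  Cmult (CRInt (fun s => f (line a b s)) 0 1) (Cminus b a).

Lemma seg_int_ext f1 f2 a b : (forall z, f1 z = f2 z) -> seg_int f1 a b = seg_int f2 a b.
Proof. intros H. unfold seg_int. f_equal. apply CRInt_ext. intros; apply H. Qed.

Lemma seg_int_const c a b : seg_int (fun _ => c) a b = Cmult c (Cminus b a).
Proof. unfold seg_int. rewrite CRInt_const. replace (1 - 0) with 1 by ring. ring. Qed.

Lemma seg_int_plus f1 f2 a b : Ccont_seg f1 a b -> Ccont_seg f2 a b ->
  seg_int (fun z => Cplus (f1 z) (f2 z)) a b = Cplus (seg_int f1 a b) (seg_int f2 a b).
Proof.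
  intros H1 H2. unfold seg_int. rewrite CRInt_plus by (apply Rcont_on_of_Ccont_seg; auto). ring.
Qed.

Lemma seg_int_on_line f a b t u : Rcont_on (fun s => f (line a b s)) t u ->
  seg_int f (line a b t) (line a b u) = Cmult (CRInt (fun s => f (line a b s)) t u) (Cminus b a).
Proof.
  intros H. unfold seg_int.
  set (g := fun s => f (line a b s)).
  replace (Cminus (line a b u) (line a b t)) with (Cmult (RtoC (u - t)) (Cminus b a))
    by (unfold line; rewrite RtoC_minus; ring).
  rewrite Cmult_assoc. f_equal.
  rewrite (CRInt_ext _ (fun s => g ((u - t) * s + t))).
  2:{ intros s. unfold g, line. f_equal. rewrite !RtoC_plus, !RtoC_mult, !RtoC_minus. ring. }
  rewrite Cmult_comm, <- CRInt_cmul.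
  - pose proof (CRInt_comp_lin g (u - t) t 0 1) as E.
    replace ((u - t) * 0 + t) with t in E by ring. replace ((u - t) * 1 + t) with u in E by ring.
    apply E, H.
  - intros x Hx. rewrite Rmin_left, Rmax_right in Hx by lra.
    apply Rcont_comp_affine, H.
    unfold Rmin, Rmax. destruct (Rle_dec t u); nra.
Qed.

Lemma seg_int_rev f a b : Ccont_seg f a b -> seg_int f b a = Copp (seg_int f a b).
Proof.
  intros H. pose proof (Rcont_on_of_Ccont_seg f a b H) as Hg.
  assert (Hg' : Rcont_on (fun s => f (line a b s)) 1 0)
    by (intros x Hx; apply Hg; rewrite Rmin_comm, Rmax_comm; auto).
  pose proof (seg_int_on_line f a b 1 0 Hg') as E.
  rewrite line_0, line_1, CRInt_swap in E by auto.
  rewrite E. unfold seg_int. ring.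
Qed.

Lemma seg_int_split f a b t : Ccont_seg f a b -> 0 <= t <= 1 ->
  seg_int f a b = Cplus (seg_int f a (line a b t)) (seg_int f (line a b t) b).
Proof.
  intros H Ht. pose proof (Rcont_on_of_Ccont_seg f a b H) as Hg.
  assert (H0t : Rcont_on (fun s => f (line a b s)) 0 t).
  { apply (Rcont_on_sub _ 0 1); auto; unfold Rmin, Rmax; repeat destruct Rle_dec; lra. }
  assert (Ht1 : Rcont_on (fun s => f (line a b s)) t 1).
  { apply (Rcont_on_sub _ 0 1); auto; unfold Rmin, Rmax; repeat destruct Rle_dec; lra. }
  pose proof (seg_int_on_line f a b 0 t H0t) as E1.
  pose proof (seg_int_on_line f a b t 1 Ht1) as E2.
  rewrite line_0 in E1. rewrite line_1 in E2. rewrite E1, E2.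
  unfold seg_int at 1. rewrite <- (CRInt_Chasles _ 0 t 1) by auto. ring.
Qed.

Lemma seg_int_FTC F f a b :
  (forall s, 0 <= s <= 1 -> is_Cderiv F (line a b s) (f (line a b s))) -> Ccont_seg f a b ->
  seg_int f a b = Cminus (F b) (F a).
Proof.
  intros HD HC. unfold seg_int.
  rewrite Cmult_comm, <- CRInt_cmul by (apply Rcont_on_of_Ccont_seg; auto).
  rewrite (CRInt_ext _ (fun s => Cmult (f (line a b s)) (Cminus b a))) by (intros; apply Cmult_comm).
  rewrite (CRInt_FTC (fun s => F (line a b s))); [ | lra | | ].
  - rewrite line_0, line_1. reflexivity.
  - intros x Hx. apply is_Rderiv_comp. apply HD; auto. apply is_Rderiv_line.
  - intros x Hx. rewrite Rmin_left, Rmax_right in Hx by lra. apply Rcont_mult.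
    + apply Rcont_comp; [apply HC; auto | apply Rcont_line].
    + apply Rcont_const.
Qed.

Lemma seg_int_bound f a b M : Ccont_seg f a b ->
  (forall s, 0 <= s <= 1 -> Cmod (f (line a b s)) <= M) ->
  Cmod (seg_int f a b) <= 2 * M * Cmod (Cminus b a).
Proof.
  intros H HM. unfold seg_int. rewrite Cmod_mult.
  pose proof (CRInt_bound (fun s => f (line a b s)) 0 1 M ltac:(lra) (Rcont_on_of_Ccont_seg _ _ _ H) HM).
  pose proof (Cmod_ge_0 (Cminus b a)). nra.
Qed.

Definition tri_int f a b c := Cplus (Cplus (seg_int f a b) (seg_int f b c)) (seg_int f c a).

Lemma tri_int_bound g a b c M : Ccont_seg g a b -> Ccont_seg g b c -> Ccont_seg g c a ->
  (forall s, 0 <= s <= 1 -> Cmod (g (line a b s)) <= M) ->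
  (forall s, 0 <= s <= 1 -> Cmod (g (line b c s)) <= M) ->
  (forall s, 0 <= s <= 1 -> Cmod (g (line c a s)) <= M) ->
  Cmod (tri_int g a b c) <= 2 * M * (Cmod (Cminus b a) + Cmod (Cminus c b) + Cmod (Cminus a c)).
Proof.
  intros H1 H2 H3 K1 K2 K3. unfold tri_int.
  pose proof (seg_int_bound g a b M H1 K1). pose proof (seg_int_bound g b c M H2 K2).
  pose proof (seg_int_bound g c a M H3 K3).
  eapply Rle_trans. apply Cmod_triangle3. lra.
Qed.

Lemma is_Cderiv_quadratic (al be z0 x : C) :
  is_Cderiv (fun y => Cplus (Cmult al y) (Cmult be (Cmult (Cminus y z0) (Cminus y z0))))
        x (Cplus al (Cmult (RtoC 2) (Cmult be (Cminus x z0)))).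
Proof.
  intros eps Heps. pose proof (Cmod_ge_0 be).
  exists (eps / (Cmod be + 1)). split. apply Rdiv_lt_0_compat; lra.
  intros h Hh.
  replace (Cminus (Cminus (Cplus (Cmult al (Cplus x h))
                                 (Cmult be (Cmult (Cminus (Cplus x h) z0) (Cminus (Cplus x h) z0))))
                          (Cplus (Cmult al x) (Cmult be (Cmult (Cminus x z0) (Cminus x z0)))))
                  (Cmult (Cplus al (Cmult (RtoC 2) (Cmult be (Cminus x z0)))) h))
    with (Cmult be (Cmult h h)) by ring.
  rewrite !Cmod_mult. pose proof (Cmod_ge_0 h).
  assert (Cmod h * (Cmod be + 1) < eps) by (apply Rlt_div_r; lra).
  nra.
Qed.

Lemma Ccont_affine al be z0 x : Ccont (fun y => Cplus al (Cmult be (Cminus y z0))) x.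
Proof.
  apply Ccont_plus; [apply Ccont_const|]. apply Ccont_cmul.
  apply (Ccont_ext _ (fun y => Cplus y (Copp z0))); [intros; ring|].
  apply Ccont_plus; [apply Ccont_id | apply Ccont_const].
Qed.

Lemma tri_int_affine (al be z0 a b c : C) :
  tri_int (fun x => Cplus al (Cmult be (Cminus x z0))) a b c = RtoC 0.
Proof.
  set (F := fun y => Cplus (Cmult al y) (Cmult (Cmult be (/ 2)%C) (Cmult (Cminus y z0) (Cminus y z0)))).
  assert (HF : forall x, is_Cderiv F x (Cplus al (Cmult be (Cminus x z0)))).
  { intros x. eapply is_Cderiv_ext_d; [|apply (is_Cderiv_quadratic al (Cmult be (/2)%C) z0 x)]. field. }
  unfold tri_int. rewrite !(seg_int_FTC F) by (unfold Ccont_seg; intros; first [apply HF | apply Ccont_affine]). ring.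
Qed.

Lemma tri_int_sub_affine f al be z0 a b c : Ccont_seg f a b -> Ccont_seg f b c -> Ccont_seg f c a ->
  tri_int f a b c = tri_int (fun x => Cminus (f x) (Cplus al (Cmult be (Cminus x z0)))) a b c.
Proof.
  intros Hab Hbc Hca.
  set (Af := fun x => Cplus al (Cmult be (Cminus x z0))).
  assert (HsA : forall p q, Ccont_seg Af p q) by (intros p q s _; apply Ccont_affine).
  assert (Hsg : forall p q, Ccont_seg f p q -> Ccont_seg (fun x => Cminus (f x) (Af x)) p q).
  { intros p q H s Hs. apply Ccont_plus; auto.
    apply (Ccont_ext _ (fun x => Cmult (Copp (RtoC 1)) (Af x))); [intros; ring|].
    apply Ccont_cmul, Ccont_affine. }
  pose proof (tri_int_affine al be z0 a b c) as TA. fold Af in TA.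
  change (tri_int f a b c = tri_int (fun x => Cminus (f x) (Af x)) a b c).
  unfold tri_int at 1.
  rewrite !(seg_int_ext f (fun x => Cplus (Cminus (f x) (Af x)) (Af x))) by (intros; ring).
  rewrite !seg_int_plus by auto.
  transitivity (Cplus (tri_int (fun x => Cminus (f x) (Af x)) a b c) (tri_int Af a b c)).
  - unfold tri_int. ring.
  - rewrite TA. ring.
Qed.


(** * Goursat's lemma *)

Lemma half_pow_pos n : 0 < (/2) ^ n.
Proof. apply pow_lt. lra. Qed.

Lemma half_pow_small eps : 0 < eps -> exists n, (/2) ^ n < eps.
Proof.
  intros He. destruct (pow_lt_1_zero (/2) ltac:(rewrite Rabs_right; lra) eps He) as [N HN].
  exists N. specialize (HN N (Nat.le_refl N)). rewrite Rabs_right in HN; auto.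
  left. apply half_pow_pos.
Qed.

Lemma Rle_0_of_forall_eps x K : 0 <= K -> (forall eps, 0 < eps -> x <= K * eps) -> x <= 0.
Proof.
  intros HK H. destruct (Rle_dec x 0) as [|Hx]; auto.
  specialize (H (x / (2 * (K + 1))) ltac:(apply Rdiv_lt_0_compat; lra)).
  assert (K * (x / (2 * (K + 1))) < x).
  { replace (K * (x / (2 * (K + 1)))) with (x * (K / (2 * (K + 1)))) by (field; lra).
    assert (K / (2 * (K + 1)) < 1) by (apply Rlt_div_l; lra). nra. }
  lra.
Qed.

Lemma Rle_0_of_geom x K r : 0 <= r < 1 -> 0 <= K ->
  (forall N, (1 <= N)%nat -> x <= K * r ^ N) -> x <= 0.
Proof.
  intros Hr HK H. apply (Rle_0_of_forall_eps x K HK). intros eps Heps.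
  destruct (pow_lt_1_zero r ltac:(rewrite Rabs_right; lra) eps Heps) as [N HN].
  specialize (HN (S N) ltac:(lia)). rewrite Rabs_right in HN by (apply Rle_ge, pow_le; lra).
  specialize (H (S N) ltac:(lia)). nra.
Qed.

Lemma half_pow_limit (u : nat -> R) K : 0 <= K ->
  (forall n, Rabs (u (S n) - u n) <= K * (/2) ^ n) ->
  exists l, forall n, Rabs (l - u n) <= 2 * K * (/2) ^ n.
Proof.
  intros HK H.
  assert (G : forall n k, Rabs (u (k + n)%nat - u n) <= 2 * K * (/2) ^ n - 2 * K * (/2) ^ (k + n)).
  { intros n k. induction k.
    - simpl. rewrite Rminus_diag, Rabs_R0. lra.
    - replace (S k + n)%nat with (S (k + n)) by lia.
      specialize (H (k + n)%nat). replace ((/2) ^ S (k + n)) with ((/2) ^ (k + n) / 2) by (simpl; field).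
      replace (u (S (k + n)) - u n) with ((u (S (k + n)) - u (k + n)%nat) + (u (k + n)%nat - u n)) by ring.
      eapply Rle_trans. apply Rabs_triang. pose proof (half_pow_pos (k + n)). lra. }
  assert (B : forall n k, (n <= k)%nat -> Rabs (u k - u n) <= 2 * K * (/2) ^ n).
  { intros n k Hk. replace k with ((k - n) + n)%nat by lia.
    pose proof (G n (k - n)%nat). pose proof (half_pow_pos ((k - n) + n)). nra. }
  assert (Hc : Cauchy_crit u).
  { intros eps Heps. destruct (half_pow_small (eps / (4 * K + 1))) as [N HN].
    { apply Rdiv_lt_0_compat; lra. }
    exists N. intros n m Hn Hm. unfold R_dist.
    pose proof (B N n Hn). pose proof (B N m Hm).
    replace (u n - u m) with ((u n - u N) - (u m - u N)) by ring.
    eapply Rle_lt_trans. apply Rabs_triang. rewrite Rabs_Ropp.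
    pose proof (half_pow_pos N).
    assert ((/2) ^ N * (4 * K + 1) < eps) by (apply Rlt_div_r; lra).
    nra. }
  destruct (Rcomplete.R_complete u Hc) as [l Hl]. exists l. intros n.
  destruct (Rle_dec (Rabs (l - u n)) (2 * K * (/2) ^ n)) as [|Hnot]; auto. exfalso.
  set (e := Rabs (l - u n) - 2 * K * (/2) ^ n).
  destruct (Hl e ltac:(unfold e; lra)) as [N HN].
  specialize (HN (Nat.max N n) ltac:(lia)). unfold R_dist in HN.
  pose proof (B n (Nat.max N n) ltac:(lia)).
  assert (Rabs (l - u n) <= Rabs (u (Nat.max N n) - u n) + Rabs (u (Nat.max N n) - l)).
  { replace (l - u n) with ((u (Nat.max N n) - u n) + - (u (Nat.max N n) - l)) by ring.
    eapply Rle_trans. apply Rabs_triang. rewrite Rabs_Ropp. lra. }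
  unfold e in HN. lra.
Qed.

(* Points of a triangle are handled through their coordinates [(p1, p2)] in the
   affine frame [a, b - a, c - a]; [dist1] is the l^1 distance of coordinates. *)
Definition pt2 := (R * R)%type.

Definition lerp (p q : pt2) (s : R) : pt2 :=
  (fst p + s * (fst q - fst p), snd p + s * (snd q - snd p)).

Definition mid (p q : pt2) : pt2 := lerp p q (1/2).

Definition in_simplex (p : pt2) := 0 <= fst p /\ 0 <= snd p /\ fst p + snd p <= 1.

Definition dist1 (p q : pt2) := Rabs (fst p - fst q) + Rabs (snd p - snd q).

Lemma in_simplex_lerp p q s : in_simplex p -> in_simplex q -> 0 <= s <= 1 -> in_simplex (lerp p q s).
Proof. unfold in_simplex, lerp; simpl. intros. nra. Qed.

Lemma in_simplex_mid p q : in_simplex p -> in_simplex q -> in_simplex (mid p q).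
Proof. intros. apply in_simplex_lerp; auto; lra. Qed.

Lemma dist1_ge_0 p q : 0 <= dist1 p q.
Proof. unfold dist1. pose proof (Rabs_pos (fst p - fst q)). pose proof (Rabs_pos (snd p - snd q)). lra. Qed.

Lemma dist1_refl p : dist1 p p = 0.
Proof. unfold dist1. rewrite !Rminus_diag, Rabs_R0. lra. Qed.

Lemma dist1_sym p q : dist1 p q = dist1 q p.
Proof. unfold dist1. rewrite (Rabs_minus_sym (fst p)), (Rabs_minus_sym (snd p)). auto. Qed.

Lemma dist1_triangle p q r : dist1 p r <= dist1 p q + dist1 q r.
Proof.
  unfold dist1.
  pose proof (Rabs_triang (fst p - fst q) (fst q - fst r)).
  pose proof (Rabs_triang (snd p - snd q) (snd q - snd r)).
  replace (fst p - fst q + (fst q - fst r)) with (fst p - fst r) in * by ring.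
  replace (snd p - snd q + (snd q - snd r)) with (snd p - snd r) in * by ring. lra.
Qed.

Lemma dist1_lerp p q s r : 0 <= s <= 1 ->
  dist1 (lerp p q s) r <= (1 - s) * dist1 p r + s * dist1 q r.
Proof.
  intros Hs. unfold dist1, lerp; simpl.
  replace (fst p + s * (fst q - fst p) - fst r) with ((1 - s) * (fst p - fst r) + s * (fst q - fst r)) by ring.
  replace (snd p + s * (snd q - snd p) - snd r) with ((1 - s) * (snd p - snd r) + s * (snd q - snd r)) by ring.
  pose proof (Rabs_triang ((1 - s) * (fst p - fst r)) (s * (fst q - fst r))).
  pose proof (Rabs_triang ((1 - s) * (snd p - snd r)) (s * (snd q - snd r))).
  rewrite !Rabs_mult, !(Rabs_right s), !(Rabs_right (1 - s)) in * by lra. lra.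
Qed.

Lemma dist1_mid_l p q : dist1 (mid p q) p = dist1 p q / 2.
Proof.
  unfold dist1, mid, lerp; simpl.
  replace (fst p + 1 / 2 * (fst q - fst p) - fst p) with ((fst p - fst q) * (-/2)) by field.
  replace (snd p + 1 / 2 * (snd q - snd p) - snd p) with ((snd p - snd q) * (-/2)) by field.
  rewrite !Rabs_mult, (Rabs_left (-/2)) by lra. field.
Qed.

Lemma dist1_mid_r p q : dist1 (mid p q) q = dist1 p q / 2.
Proof.
  unfold dist1, mid, lerp; simpl.
  replace (fst p + 1 / 2 * (fst q - fst p) - fst q) with ((fst p - fst q) * (/2)) by field.
  replace (snd p + 1 / 2 * (snd q - snd p) - snd q) with ((snd p - snd q) * (/2)) by field.
  rewrite !Rabs_mult, (Rabs_right (/2)) by lra. field.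
Qed.

Lemma dist1_mid_mid p q r : dist1 (mid p q) (mid q r) = dist1 p r / 2.
Proof.
  unfold dist1, mid, lerp; simpl.
  replace (fst p + 1 / 2 * (fst q - fst p) - (fst q + 1 / 2 * (fst r - fst q))) with ((fst p - fst r) * (/2)) by field.
  replace (snd p + 1 / 2 * (snd q - snd p) - (snd q + 1 / 2 * (snd r - snd q))) with ((snd p - snd r) * (/2)) by field.
  rewrite !Rabs_mult, (Rabs_right (/2)) by lra. field.
Qed.

Definition tri2 := (pt2 * pt2 * pt2)%type.
Definition vtx1 (t : tri2) := fst (fst t).
Definition vtx2 (t : tri2) := snd (fst t).
Definition vtx3 (t : tri2) := snd t.

Definition perimeter (t : tri2) :=
  dist1 (vtx1 t) (vtx2 t) + dist1 (vtx2 t) (vtx3 t) + dist1 (vtx3 t) (vtx1 t).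

Definition in_simplex3 (t : tri2) := in_simplex (vtx1 t) /\ in_simplex (vtx2 t) /\ in_simplex (vtx3 t).

Definition quarter1 (t : tri2) : tri2 := (vtx1 t, mid (vtx1 t) (vtx2 t), mid (vtx3 t) (vtx1 t)).
Definition quarter2 (t : tri2) : tri2 := (mid (vtx1 t) (vtx2 t), vtx2 t, mid (vtx2 t) (vtx3 t)).
Definition quarter3 (t : tri2) : tri2 := (mid (vtx3 t) (vtx1 t), mid (vtx2 t) (vtx3 t), vtx3 t).
Definition quarter4 (t : tri2) : tri2 :=
  (mid (vtx1 t) (vtx2 t), mid (vtx2 t) (vtx3 t), mid (vtx3 t) (vtx1 t)).

Lemma in_simplex3_quarters t : in_simplex3 t ->
  in_simplex3 (quarter1 t) /\ in_simplex3 (quarter2 t) /\ in_simplex3 (quarter3 t) /\ in_simplex3 (quarter4 t).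
Proof.
  intros [H1 [H2 H3]]. unfold in_simplex3, quarter1, quarter2, quarter3, quarter4, vtx1, vtx2, vtx3 in *; simpl.
  pose proof (in_simplex_mid _ _ H1 H2). pose proof (in_simplex_mid _ _ H2 H3). pose proof (in_simplex_mid _ _ H3 H1).
  tauto.
Qed.

Lemma perimeter_quarters t :
  perimeter (quarter1 t) = perimeter t / 2 /\ perimeter (quarter2 t) = perimeter t / 2 /\
  perimeter (quarter3 t) = perimeter t / 2 /\ perimeter (quarter4 t) = perimeter t / 2.
Proof.
  unfold perimeter, quarter1, quarter2, quarter3, quarter4, vtx1, vtx2, vtx3; simpl.
  set (p := fst (fst t)). set (q := snd (fst t)). set (r := snd t).
  assert (Spq : dist1 q p = dist1 p q) by apply dist1_sym.
  assert (Sqr : dist1 r q = dist1 q r) by apply dist1_sym.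
  assert (Srp : dist1 p r = dist1 r p) by apply dist1_sym.
  assert (A1 : forall x y, dist1 x (mid x y) = dist1 x y / 2) by (intros; rewrite dist1_sym; apply dist1_mid_l).
  assert (A2 : forall x y, dist1 y (mid x y) = dist1 x y / 2) by (intros; rewrite dist1_sym; apply dist1_mid_r).
  assert (A3 : forall x y z, dist1 (mid y z) (mid x y) = dist1 x z / 2)
    by (intros; rewrite dist1_sym; apply dist1_mid_mid).
  repeat split; rewrite ?dist1_mid_l, ?dist1_mid_r, ?A1, ?A2, ?dist1_mid_mid, ?A3, ?Spq, ?Sqr, ?Srp; field.
Qed.

Lemma dist1_vtx1_quarters t :
  dist1 (vtx1 (quarter1 t)) (vtx1 t) <= perimeter t /\ dist1 (vtx1 (quarter2 t)) (vtx1 t) <= perimeter t /\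
  dist1 (vtx1 (quarter3 t)) (vtx1 t) <= perimeter t /\ dist1 (vtx1 (quarter4 t)) (vtx1 t) <= perimeter t.
Proof.
  unfold perimeter, quarter1, quarter2, quarter3, quarter4, vtx1, vtx2, vtx3; simpl.
  set (p := fst (fst t)); set (q := snd (fst t)); set (r := snd t).
  pose proof (dist1_ge_0 p q); pose proof (dist1_ge_0 q r); pose proof (dist1_ge_0 r p).
  rewrite dist1_refl, dist1_mid_l, dist1_mid_r. lra.
Qed.

Lemma dist1_vtx_le_perimeter t :
  dist1 (vtx2 t) (vtx1 t) <= perimeter t /\ dist1 (vtx3 t) (vtx1 t) <= perimeter t.
Proof.
  pose proof (dist1_ge_0 (vtx1 t) (vtx2 t)). pose proof (dist1_ge_0 (vtx2 t) (vtx3 t)).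
  pose proof (dist1_ge_0 (vtx3 t) (vtx1 t)).
  unfold perimeter. rewrite dist1_sym. lra.
Qed.

Section Goursat.

Variables (f : C -> C) (a b c : C).

Definition bary (p : pt2) : C :=
  Cplus a (Cplus (Cmult (RtoC (fst p)) (Cminus b a)) (Cmult (RtoC (snd p)) (Cminus c a))).

Definition bary_lip := Cmod (Cminus b a) + Cmod (Cminus c a).

Lemma bary_lip_ge_0 : 0 <= bary_lip.
Proof. unfold bary_lip. pose proof (Cmod_ge_0 (Cminus b a)). pose proof (Cmod_ge_0 (Cminus c a)). lra. Qed.

Lemma line_bary p q s : line (bary p) (bary q) s = bary (lerp p q s).
Proof. unfold line, bary, lerp; simpl. rewrite !RtoC_plus, !RtoC_mult, !RtoC_minus. ring. Qed.

Lemma bary_lipschitz p q : Cmod (Cminus (bary p) (bary q)) <= bary_lip * dist1 p q.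
Proof.
  unfold bary, bary_lip, dist1.
  replace (Cminus (Cplus a (Cplus (Cmult (RtoC (fst p)) (Cminus b a)) (Cmult (RtoC (snd p)) (Cminus c a))))
                  (Cplus a (Cplus (Cmult (RtoC (fst q)) (Cminus b a)) (Cmult (RtoC (snd q)) (Cminus c a)))))
    with (Cplus (Cmult (RtoC (fst p - fst q)) (Cminus b a)) (Cmult (RtoC (snd p - snd q)) (Cminus c a)))
    by (rewrite !RtoC_minus; ring).
  eapply Rle_trans. apply Cmod_triangle. rewrite !Cmod_mult, !Cmod_R.
  pose proof (Cmod_ge_0 (Cminus b a)). pose proof (Cmod_ge_0 (Cminus c a)).
  pose proof (Rabs_pos (fst p - fst q)). pose proof (Rabs_pos (snd p - snd q)). nra.
Qed.

Definition tri2_int (t : tri2) := tri_int f (bary (vtx1 t)) (bary (vtx2 t)) (bary (vtx3 t)).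

Hypothesis f_diff : forall p, in_simplex p -> exists d, is_Cderiv f (bary p) d.

Lemma Ccont_seg_simplex p q : in_simplex p -> in_simplex q -> Ccont_seg f (bary p) (bary q).
Proof.
  intros Hp Hq s Hs. rewrite line_bary.
  destruct (f_diff (lerp p q s)) as [d Hd]; [apply in_simplex_lerp; auto|].
  eapply Ccont_of_is_Cderiv; eauto.
Qed.

Lemma tri2_int_quarters t : in_simplex3 t ->
  tri2_int t = Cplus (Cplus (tri2_int (quarter1 t)) (tri2_int (quarter2 t)))
                     (Cplus (tri2_int (quarter3 t)) (tri2_int (quarter4 t))).
Proof.
  intros [H1 [H2 H3]].
  unfold tri2_int, tri_int, quarter1, quarter2, quarter3, quarter4, vtx1, vtx2, vtx3 in *; simpl.
  set (p := fst (fst t)) in *. set (q := snd (fst t)) in *. set (r := snd t) in *.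
  assert (M12 := in_simplex_mid p q H1 H2). assert (M23 := in_simplex_mid q r H2 H3).
  assert (M31 := in_simplex_mid r p H3 H1).
  assert (Hmid : forall x y, bary (mid x y) = line (bary x) (bary y) (1/2)) by (intros; rewrite line_bary; auto).
  rewrite (seg_int_split f (bary p) (bary q) (1/2)) by (try apply Ccont_seg_simplex; auto; lra).
  rewrite (seg_int_split f (bary q) (bary r) (1/2)) by (try apply Ccont_seg_simplex; auto; lra).
  rewrite (seg_int_split f (bary r) (bary p) (1/2)) by (try apply Ccont_seg_simplex; auto; lra).
  rewrite <- !Hmid.
  rewrite (seg_int_rev f (bary (mid r p)) (bary (mid p q))) by (apply Ccont_seg_simplex; auto).
  rewrite (seg_int_rev f (bary (mid p q)) (bary (mid q r))) by (apply Ccont_seg_simplex; auto).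
  rewrite (seg_int_rev f (bary (mid q r)) (bary (mid r p))) by (apply Ccont_seg_simplex; auto).
  ring.
Qed.

Definition larger (x y : tri2) : tri2 :=
  if Rle_dec (Cmod (tri2_int y)) (Cmod (tri2_int x)) then x else y.

Definition largest_quarter (t : tri2) : tri2 :=
  larger (larger (quarter1 t) (quarter2 t)) (larger (quarter3 t) (quarter4 t)).

Lemma largest_quarter_cases t :
  largest_quarter t = quarter1 t \/ largest_quarter t = quarter2 t \/
  largest_quarter t = quarter3 t \/ largest_quarter t = quarter4 t.
Proof. unfold largest_quarter, larger. repeat destruct Rle_dec; tauto. Qed.

Lemma largest_quarter_ge t : in_simplex3 t -> Cmod (tri2_int t) <= 4 * Cmod (tri2_int (largest_quarter t)).
Proof.
  intros H. rewrite tri2_int_quarters by auto.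
  eapply Rle_trans. apply Cmod_triangle.
  pose proof (Cmod_triangle (tri2_int (quarter1 t)) (tri2_int (quarter2 t))).
  pose proof (Cmod_triangle (tri2_int (quarter3 t)) (tri2_int (quarter4 t))).
  unfold largest_quarter, larger. repeat destruct Rle_dec; lra.
Qed.

Definition nested_tri (n : nat) : tri2 := Nat.iter n largest_quarter ((0, 0), (1, 0), (0, 1)).

Lemma nested_tri_S n : nested_tri (S n) = largest_quarter (nested_tri n).
Proof. reflexivity. Qed.

Lemma nested_tri_in_simplex n : in_simplex3 (nested_tri n).
Proof.
  induction n.
  - unfold in_simplex3, in_simplex, vtx1, vtx2, vtx3; simpl. lra.
  - rewrite nested_tri_S. destruct (in_simplex3_quarters _ IHn) as [A [B [C' D]]].
    destruct (largest_quarter_cases (nested_tri n)) as [E|[E|[E|E]]]; rewrite E; auto.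
Qed.

Lemma nested_tri_perimeter n : perimeter (nested_tri n) = 4 * (/2) ^ n.
Proof.
  induction n.
  - unfold perimeter, dist1, vtx1, vtx2, vtx3; simpl.
    replace (0 - 1) with (-1) by ring. replace (1 - 0) with 1 by ring. replace (0 - 0) with 0 by ring.
    rewrite Rabs_R0, Rabs_R1, Rabs_m1. lra.
  - rewrite nested_tri_S. destruct (perimeter_quarters (nested_tri n)) as [A [B [C' D]]].
    simpl. destruct (largest_quarter_cases (nested_tri n)) as [E|[E|[E|E]]]; rewrite E; lra.
Qed.

Lemma nested_tri_int_ge n : Cmod (tri_int f a b c) <= 4 ^ n * Cmod (tri2_int (nested_tri n)).
Proof.
  induction n.
  - replace (tri2_int (nested_tri 0)) with (tri_int f a b c).
    + simpl. lra.
    + unfold tri2_int, bary, vtx1, vtx2, vtx3; simpl. f_equal; ring.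
  - rewrite nested_tri_S.
    pose proof (largest_quarter_ge (nested_tri n) (nested_tri_in_simplex n)).
    pose proof (pow_le 4 n ltac:(lra)). simpl. nra.
Qed.

Lemma nested_tri_limit : exists pi, in_simplex pi /\ forall n, dist1 (vtx1 (nested_tri n)) pi <= 16 * (/2) ^ n.
Proof.
  assert (Hstep : forall n, dist1 (vtx1 (nested_tri (S n))) (vtx1 (nested_tri n)) <= 4 * (/2) ^ n).
  { intros n. rewrite nested_tri_S, <- nested_tri_perimeter.
    destruct (dist1_vtx1_quarters (nested_tri n)) as [A [B [C' D]]].
    destruct (largest_quarter_cases (nested_tri n)) as [E|[E|[E|E]]]; rewrite E; auto. }
  set (u := fun n => fst (vtx1 (nested_tri n))). set (w := fun n => snd (vtx1 (nested_tri n))).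
  destruct (half_pow_limit u 4 ltac:(lra)) as [l Hl].
  { intros n. pose proof (Hstep n). unfold dist1 in *.
    pose proof (Rabs_pos (snd (vtx1 (nested_tri (S n))) - snd (vtx1 (nested_tri n)))). unfold u. lra. }
  destruct (half_pow_limit w 4 ltac:(lra)) as [m Hm].
  { intros n. pose proof (Hstep n). unfold dist1 in *.
    pose proof (Rabs_pos (fst (vtx1 (nested_tri (S n))) - fst (vtx1 (nested_tri n)))). unfold w. lra. }
  assert (Hin : forall n, 0 <= u n /\ 0 <= w n /\ u n + w n <= 1)
    by (intros n; apply (nested_tri_in_simplex n)).
  exists (l, m). split.
  - unfold in_simplex; simpl. split; [|split].
    + assert (-l <= 0); [|lra]. apply (Rle_0_of_geom _ 8 (/2)); [lra|lra|]. intros n _.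
      specialize (Hl n). pose proof (Hin n). pose proof (Rle_abs (u n - l)). rewrite Rabs_minus_sym in Hl. lra.
    + assert (-m <= 0); [|lra]. apply (Rle_0_of_geom _ 8 (/2)); [lra|lra|]. intros n _.
      specialize (Hm n). pose proof (Hin n). pose proof (Rle_abs (w n - m)). rewrite Rabs_minus_sym in Hm. lra.
    + assert (l + m - 1 <= 0); [|lra]. apply (Rle_0_of_geom _ 16 (/2)); [lra|lra|]. intros n _.
      specialize (Hl n). specialize (Hm n). pose proof (Hin n).
      pose proof (Rle_abs (l - u n)). pose proof (Rle_abs (m - w n)). lra.
  - intros n. unfold dist1; simpl. rewrite (Rabs_minus_sym (fst _)), (Rabs_minus_sym (snd _)).
    specialize (Hl n). specialize (Hm n). unfold u, w in *. lra.
Qed.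

(* Near a point of complex differentiability [f] is affine up to [eps |z - z0|], and affine
   functions have vanishing triangle integrals. *)
Lemma tri2_int_near_point pi d0 eps del r t :
  in_simplex3 t -> 0 <= eps -> bary_lip * r < del ->
  (forall h, Cmod h < del ->
     Cmod (Cminus (Cminus (f (Cplus (bary pi) h)) (f (bary pi))) (Cmult d0 h)) <= eps * Cmod h) ->
  dist1 (vtx1 t) pi <= r -> dist1 (vtx2 t) pi <= r -> dist1 (vtx3 t) pi <= r ->
  Cmod (tri2_int t) <= 2 * (eps * (bary_lip * r)) * (bary_lip * perimeter t).
Proof.
  intros [I1 [I2 I3]] Heps Hr Kdel Hv1 Hv2 Hv3.
  pose proof bary_lip_ge_0 as HL.
  set (z0 := bary pi).
  set (g := fun x => Cminus (f x) (Cplus (f z0) (Cmult d0 (Cminus x z0)))).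
  assert (Hsg : forall p q, in_simplex p -> in_simplex q -> Ccont_seg g (bary p) (bary q)).
  { intros p q Hp Hq s Hs. apply Ccont_plus; [apply Ccont_seg_simplex; auto|].
    apply (Ccont_ext _ (fun x => Cmult (Copp (RtoC 1)) (Cplus (f z0) (Cmult d0 (Cminus x z0))))); [intros; ring|].
    apply Ccont_cmul, Ccont_affine. }
  assert (Hg : forall p q, dist1 p pi <= r -> dist1 q pi <= r -> forall s, 0 <= s <= 1 ->
             Cmod (g (line (bary p) (bary q) s)) <= eps * (bary_lip * r)).
  { intros p q Hp Hq s Hs. rewrite line_bary.
    set (x := bary (lerp p q s)).
    assert (Hx : Cmod (Cminus x z0) <= bary_lip * r).
    { eapply Rle_trans. apply bary_lipschitz. apply Rmult_le_compat_l; auto.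
      eapply Rle_trans. apply dist1_lerp; auto. nra. }
    specialize (Kdel (Cminus x z0) ltac:(lra)).
    fold z0 in Kdel. replace (Cplus z0 (Cminus x z0)) with x in Kdel by ring.
    replace (g x) with (Cminus (Cminus (f x) (f z0)) (Cmult d0 (Cminus x z0))) by (unfold g; ring).
    eapply Rle_trans; [exact Kdel|]. apply Rmult_le_compat_l; lra. }
  unfold tri2_int. rewrite (tri_int_sub_affine f (f z0) d0 z0) by (apply Ccont_seg_simplex; auto).
  eapply Rle_trans. apply tri_int_bound.
  1-3: apply Hsg; auto.
  1-3: intros s Hs; apply Hg; auto.
  apply Rmult_le_compat_l. { assert (0 <= bary_lip * r) by (pose proof (dist1_ge_0 (vtx1 t) pi); nra). nra. }
  unfold perimeter.
  pose proof (bary_lipschitz (vtx2 t) (vtx1 t)). pose proof (bary_lipschitz (vtx3 t) (vtx2 t)).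
  pose proof (bary_lipschitz (vtx1 t) (vtx3 t)).
  rewrite (dist1_sym (vtx1 t) (vtx2 t)), (dist1_sym (vtx2 t) (vtx3 t)), (dist1_sym (vtx3 t) (vtx1 t)). nra.
Qed.

Theorem goursat : tri_int f a b c = RtoC 0.
Proof.
  destruct nested_tri_limit as [pi [Hpi Hlim]].
  destruct (f_diff pi Hpi) as [d0 Hd0].
  pose proof bary_lip_ge_0 as HL.
  apply Cmod_eq_0, Rle_antisym; [|apply Cmod_ge_0].
  apply (Rle_0_of_forall_eps _ (160 * bary_lip ^ 2)); [nra|]. intros eps Heps.
  destruct (Hd0 eps Heps) as [del [Hdel Kdel]].
  destruct (half_pow_small (del / (20 * (bary_lip + 1)))) as [n Hn]; [apply Rdiv_lt_0_compat; lra|].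
  pose proof (half_pow_pos n).
  set (t := nested_tri n).
  assert (Hclose : forall v, dist1 v (vtx1 t) <= perimeter t -> dist1 v pi <= 20 * (/2) ^ n).
  { intros v Hv. pose proof (dist1_triangle v (vtx1 t) pi). pose proof (Hlim n).
    unfold t in *. rewrite nested_tri_perimeter in Hv. lra. }
  destruct (dist1_vtx_le_perimeter t) as [D2 D3].
  assert (D1 : dist1 (vtx1 t) (vtx1 t) <= perimeter t)
    by (rewrite dist1_refl; unfold t; rewrite nested_tri_perimeter; lra).
  assert (Hbound := tri2_int_near_point pi d0 eps del (20 * (/2) ^ n) t (nested_tri_in_simplex n)
                      ltac:(lra) ltac:(assert ((/2) ^ n * (20 * (bary_lip + 1)) < del) by (apply Rlt_div_r; lra); nra)
                      Kdel (Hclose _ D1) (Hclose _ D2) (Hclose _ D3)).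
  unfold t in Hbound. rewrite nested_tri_perimeter in Hbound.
  pose proof (nested_tri_int_ge n).
  assert (E : 4 ^ n * ((/2) ^ n * (/2) ^ n) = 1).
  { rewrite <- !Rpow_mult_distr. replace (4 * (/2 * /2)) with 1 by field. apply pow1. }
  pose proof (pow_le 4 n ltac:(lra)).
  apply Rle_trans with (4 ^ n * (2 * (eps * (bary_lip * (20 * (/2) ^ n))) * (bary_lip * (4 * (/2) ^ n)))).
  - eapply Rle_trans; [eassumption|]. apply Rmult_le_compat_l; auto.
  - replace (4 ^ n * (2 * (eps * (bary_lip * (20 * (/ 2) ^ n))) * (bary_lip * (4 * (/ 2) ^ n))))
      with (160 * eps * bary_lip ^ 2 * (4 ^ n * ((/2) ^ n * (/2) ^ n))) by ring.
    rewrite E. lra.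
Qed.

End Goursat.

(** * Cauchy's theorem on a disc *)

Lemma disc_bary w a b p rho :
  Cmod w < rho -> Cmod a < rho -> Cmod b < rho -> in_simplex p -> Cmod (bary w a b p) < rho.
Proof.
  intros Hw Ha Hb [H1 [H2 H3]]. unfold bary.
  replace (Cplus w (Cplus (Cmult (RtoC (fst p)) (Cminus a w)) (Cmult (RtoC (snd p)) (Cminus b w))))
    with (Cplus (Cplus (Cmult (RtoC (1 - fst p - snd p)) w) (Cmult (RtoC (fst p)) a)) (Cmult (RtoC (snd p)) b))
    by (rewrite !RtoC_minus; ring).
  eapply Rle_lt_trans. apply Cmod_triangle3. rewrite !Cmod_mult, !Cmod_R, !Rabs_right by lra.
  set (l := fst p) in *. set (m := snd p) in *.
  assert (0 <= (1 - l - m) * (rho - Cmod w)) by nra. assert (0 <= l * (rho - Cmod a)) by nra.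
  assert (0 <= m * (rho - Cmod b)) by nra.
  destruct (Rle_dec l (1/3)); destruct (Rle_dec m (1/3)).
  - assert (0 < (1 - l - m) * (rho - Cmod w)) by (apply Rmult_lt_0_compat; lra). nra.
  - assert (0 < m * (rho - Cmod b)) by (apply Rmult_lt_0_compat; lra). nra.
  - assert (0 < l * (rho - Cmod a)) by (apply Rmult_lt_0_compat; lra). nra.
  - assert (0 < l * (rho - Cmod a)) by (apply Rmult_lt_0_compat; lra). nra.
Qed.

Definition cross (u v : C) := fst u * snd v - snd u * fst v.

Lemma real_comb_eq0 u v al be : cross u v <> 0 ->
  Cplus (Cmult (RtoC al) u) (Cmult (RtoC be) v) = RtoC 0 -> al = 0 /\ be = 0.
Proof.
  intros Hc E. unfold cross in Hc. destruct u as [u1 u2], v as [v1 v2].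
  unfold RtoC, Cmult, Cplus in E; simpl in *. injection E as E1 E2.
  assert (A1 : al * u1 + be * v1 = 0) by (rewrite <- E1; ring).
  assert (A2 : al * u2 + be * v2 = 0) by (rewrite <- E2; ring).
  split; apply (Rmult_eq_reg_r (u1 * v2 - u2 * v1)); auto; rewrite Rmult_0_l.
  - transitivity (v2 * (al * u1 + be * v1) - v1 * (al * u2 + be * v2)); [ring|]. rewrite A1, A2. ring.
  - transitivity (u1 * (al * u2 + be * v2) - u2 * (al * u1 + be * v1)); [ring|]. rewrite A1, A2. ring.
Qed.

Lemma cross_eq0_parallel u v : cross u v = 0 -> u <> RtoC 0 -> exists t, v = Cmult (RtoC t) u.
Proof.
  intros Hcr Hu.
  assert (Hu2 : fst u ^ 2 + snd u ^ 2 <> 0).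
  { intros E. apply Hu. destruct u as [u1 u2]; simpl in *. unfold RtoC. f_equal; nra. }
  exists ((fst v * fst u + snd v * snd u) / (fst u ^ 2 + snd u ^ 2)).
  unfold cross in Hcr. destruct u as [u1 u2], v as [v1 v2]. unfold RtoC, Cmult; simpl in *.
  f_equal.
  - replace ((v1 * u1 + v2 * u2) / (u1 * (u1 * 1) + u2 * (u2 * 1)) * u1 - 0 * u2)
      with (v1 + u2 * (u1 * v2 - u2 * v1) / (u1 * (u1 * 1) + u2 * (u2 * 1))) by (field; contradict Hu2; nra).
    rewrite Hcr. field. contradict Hu2; nra.
  - replace ((v1 * u1 + v2 * u2) / (u1 * (u1 * 1) + u2 * (u2 * 1)) * u2 + 0 * u1)
      with (v2 - u1 * (u1 * v2 - u2 * v1) / (u1 * (u1 * 1) + u2 * (u2 * 1))) by (field; contradict Hu2; nra).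
    rewrite Hcr. field. contradict Hu2; nra.
Qed.

Section VertexGoursat.

(* [q] is only known to be continuous at [w]: this is the case of a difference quotient. *)
Variables (q : C -> C) (rho : R) (w : C).
Hypothesis q_cont : forall x, Cmod x < rho -> Ccont q x.
Hypothesis q_diff : forall x, Cmod x < rho -> x <> w -> exists d, is_Cderiv q x d.
Hypothesis w_in : Cmod w < rho.

Lemma Ccont_seg_disc a b : Cmod a < rho -> Cmod b < rho -> Ccont_seg q a b.
Proof. intros Ha Hb s Hs. apply q_cont, disc_line; auto. Qed.

Lemma tri_int_vertex_collinear a t : Cmod a < rho -> Cmod (line w a t) < rho ->
  tri_int q w a (line w a t) = RtoC 0.
Proof.
  intros Ha Hb.
  set (g := fun s => q (line w a s)).
  assert (Hin : forall s, s = 0 \/ s = 1 \/ s = t -> Cmod (line w a s) < rho).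
  { intros s [E|[E|E]]; subst s; rewrite ?line_0, ?line_1; auto. }
  assert (Hg : forall s1 s2, s1 = 0 \/ s1 = 1 \/ s1 = t -> s2 = 0 \/ s2 = 1 \/ s2 = t -> Rcont_on g s1 s2).
  { intros s1 s2 H1 H2 x Hx. apply Rcont_comp; [|apply Rcont_line].
    apply q_cont. apply (disc_line_between w a s1 s2); auto. }
  unfold tri_int.
  rewrite <- (line_0 w a) at 1 4. rewrite <- (line_1 w a) at 2 3.
  rewrite !seg_int_on_line by (apply Hg; tauto). fold g.
  rewrite <- !Cmult_plus_distr_r.
  rewrite (CRInt_Chasles g 0 1 t), (CRInt_Chasles g 0 t 0), CRInt_point by (apply Hg; tauto).
  ring.
Qed.

(* Cutting off the corner at [w] leaves two triangles avoiding [w], where Goursat applies. *)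
Lemma tri_int_vertex_shrink a b s : Cmod a < rho -> Cmod b < rho ->
  cross (Cminus a w) (Cminus b w) <> 0 -> 0 < s <= 1 ->
  tri_int q w a b = tri_int q w (line w a s) (line w b s).
Proof.
  intros Ha Hb Hcr Hs.
  set (u := Cminus a w) in *. set (v := Cminus b w) in *.
  set (a' := line w a s). set (b' := line w b s).
  assert (Ha' : Cmod a' < rho) by (apply disc_line; auto; lra).
  assert (Hb' : Cmod b' < rho) by (apply disc_line; auto; lra).
  assert (T1 : tri_int q a' a b = RtoC 0).
  { apply goursat. intros p Hp. apply q_diff; [apply disc_bary; auto|].
    intros E. destruct Hp as [P1 [P2 P3]].
    assert (Cplus (Cmult (RtoC (s * (1 - fst p - snd p) + fst p)) u) (Cmult (RtoC (snd p)) v) = RtoC 0).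
    { replace (RtoC 0) with (Cminus (bary a' a b p) w) by (rewrite E; ring).
      unfold bary, a', line, u, v. rewrite !RtoC_plus, !RtoC_mult, !RtoC_minus. ring. }
    apply real_comb_eq0 in H; auto. nra. }
  assert (T2 : tri_int q a' b b' = RtoC 0).
  { apply goursat. intros p Hp. apply q_diff; [apply disc_bary; auto|].
    intros E. destruct Hp as [P1 [P2 P3]].
    assert (Cplus (Cmult (RtoC (s * (1 - fst p - snd p))) u) (Cmult (RtoC (fst p + snd p * s)) v) = RtoC 0).
    { replace (RtoC 0) with (Cminus (bary a' b b' p) w) by (rewrite E; ring).
      unfold bary, a', b', line, u, v. rewrite !RtoC_plus, !RtoC_mult, !RtoC_minus. ring. }
    apply real_comb_eq0 in H; auto. nra. }
  unfold tri_int in *.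
  rewrite (seg_int_split q w a s) by (try apply Ccont_seg_disc; auto; lra). fold a'.
  rewrite (seg_int_split q b w (1 - s)) by (try apply Ccont_seg_disc; auto; lra).
  replace (line b w (1 - s)) with b' by (unfold b', line; rewrite RtoC_minus; ring).
  rewrite (seg_int_rev q a' b) in T1 by (apply Ccont_seg_disc; auto).
  rewrite (seg_int_rev q a' b') in T2 by (apply Ccont_seg_disc; auto).
  transitivity (Cplus (Cplus (Cplus (seg_int q w a') (seg_int q a' b')) (seg_int q b' w))
    (Cplus (Cplus (Cplus (seg_int q a' a) (seg_int q a b)) (Copp (seg_int q a' b)))
           (Cplus (Cplus (seg_int q a' b) (seg_int q b b')) (Copp (seg_int q a' b'))))).
  - ring.
  - rewrite T1, T2. ring.
Qed.

Lemma Cmod_real_comb_le u v al be s : 0 <= al <= s -> 0 <= be <= s ->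
  Cmod (Cplus (Cmult (RtoC al) u) (Cmult (RtoC be) v)) <= s * (Cmod u + Cmod v).
Proof.
  intros Hal Hbe. eapply Rle_trans. apply Cmod_triangle.
  rewrite !Cmod_mult, !Cmod_R, !Rabs_right by lra.
  pose proof (Cmod_ge_0 u). pose proof (Cmod_ge_0 v). nra.
Qed.

Lemma tri_int_vertex_small a b s M : Cmod a < rho -> Cmod b < rho -> 0 < s <= 1 ->
  (forall x, Cmod (Cminus x w) <= s * (Cmod (Cminus a w) + Cmod (Cminus b w)) -> Cmod (q x) <= M) ->
  Cmod (tri_int q w (line w a s) (line w b s)) <= 2 * M * (2 * s * (Cmod (Cminus a w) + Cmod (Cminus b w))).
Proof.
  intros Ha Hb Hs HM.
  set (u := Cminus a w) in *. set (v := Cminus b w) in *.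
  assert (Hside : forall al be, 0 <= al <= s -> 0 <= be <= s ->
                    Cmod (q (Cplus w (Cplus (Cmult (RtoC al) u) (Cmult (RtoC be) v)))) <= M).
  { intros al be Hal Hbe. apply HM.
    replace (Cminus (Cplus w (Cplus (Cmult (RtoC al) u) (Cmult (RtoC be) v))) w)
      with (Cplus (Cmult (RtoC al) u) (Cmult (RtoC be) v)) by ring.
    apply Cmod_real_comb_le; auto. }
  assert (Ha' : Cmod (line w a s) < rho) by (apply disc_line; auto; lra).
  assert (Hb' : Cmod (line w b s) < rho) by (apply disc_line; auto; lra).
  eapply Rle_trans. apply tri_int_bound; try apply Ccont_seg_disc; auto.
  - intros t Ht. replace (line w (line w a s) t) with (Cplus w (Cplus (Cmult (RtoC (t * s)) u) (Cmult (RtoC 0) v)))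
      by (unfold line, u; rewrite RtoC_mult; ring).
    apply Hside; nra.
  - intros t Ht. replace (line (line w a s) (line w b s) t)
      with (Cplus w (Cplus (Cmult (RtoC (s * (1 - t))) u) (Cmult (RtoC (s * t)) v)))
      by (unfold line, u, v; rewrite !RtoC_mult, RtoC_minus; ring).
    apply Hside; nra.
  - intros t Ht. replace (line (line w b s) w t)
      with (Cplus w (Cplus (Cmult (RtoC 0) u) (Cmult (RtoC (s * (1 - t))) v)))
      by (unfold line, v; rewrite RtoC_mult, RtoC_minus; ring).
    apply Hside; nra.
  - assert (HM0 : 0 <= M) by (eapply Rle_trans; [apply Cmod_ge_0 | apply (HM w)];
      replace (Cminus w w) with (RtoC 0) by ring; rewrite Cmod_0;
      pose proof (Cmod_ge_0 u); pose proof (Cmod_ge_0 v); nra).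
    apply Rmult_le_compat_l; [lra|]. unfold line.
    replace (Cminus (Cplus w (Cmult (RtoC s) (Cminus a w))) w) with (Cmult (RtoC s) u) by (unfold u; ring).
    replace (Cminus (Cplus w (Cmult (RtoC s) (Cminus b w))) (Cplus w (Cmult (RtoC s) (Cminus a w))))
      with (Cmult (RtoC s) (Cminus v u)) by (unfold u, v; ring).
    replace (Cminus w (Cplus w (Cmult (RtoC s) (Cminus b w)))) with (Cmult (RtoC (- s)) v)
      by (unfold v; rewrite RtoC_opp; ring).
    rewrite !Cmod_mult, !Cmod_R, Rabs_right, Rabs_left1 by lra.
    pose proof (Cmod_minus_le v u). nra.
Qed.

Lemma tri_int_vertex_noncollinear a b : Cmod a < rho -> Cmod b < rho ->
  cross (Cminus a w) (Cminus b w) <> 0 -> tri_int q w a b = RtoC 0.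
Proof.
  intros Ha Hb Hcr.
  set (R0 := Cmod (Cminus a w) + Cmod (Cminus b w)).
  assert (HR0 : 0 <= R0) by (unfold R0; pose proof (Cmod_ge_0 (Cminus a w)); pose proof (Cmod_ge_0 (Cminus b w)); lra).
  destruct (q_cont w w_in 1 ltac:(lra)) as [d1 [Hd1 K1]].
  set (M := Cmod (q w) + 1).
  assert (HM : 0 < M) by (unfold M; pose proof (Cmod_ge_0 (q w)); lra).
  apply Cmod_eq_0, Rle_antisym; [|apply Cmod_ge_0].
  apply (Rle_0_of_forall_eps _ (4 * M * R0)); [nra|]. intros eps Heps.
  set (s := Rmin 1 (Rmin eps (d1 / (R0 + 1)))).
  assert (Hs : 0 < s <= 1).
  { split; [|apply Rmin_l]. repeat apply Rmin_pos; try lra. apply Rdiv_lt_0_compat; lra. }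
  assert (Hse : s <= eps) by (eapply Rle_trans; [apply Rmin_r | apply Rmin_l]).
  assert (HsR : s * R0 < d1).
  { assert (s <= d1 / (R0 + 1)) by (eapply Rle_trans; [apply Rmin_r | apply Rmin_r]).
    assert (s * (R0 + 1) <= d1) by (apply Rle_div_r; lra). nra. }
  rewrite (tri_int_vertex_shrink a b s) by auto.
  eapply Rle_trans. apply (tri_int_vertex_small a b s M); auto.
  - intros x Hx. specialize (K1 x ltac:(fold R0 in Hx; lra)).
    pose proof (Cmod_triangle (Cminus (q x) (q w)) (q w)).
    replace (Cplus (Cminus (q x) (q w)) (q w)) with (q x) in * by ring. unfold M. lra.
  - fold R0. assert (0 <= M * R0) by nra. nra.
Qed.

Lemma tri_int_vertex a b : Cmod a < rho -> Cmod b < rho -> tri_int q w a b = RtoC 0.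
Proof.
  intros Ha Hb.
  destruct (Req_dec (cross (Cminus a w) (Cminus b w)) 0) as [Hcr|Hcr];
    [|apply tri_int_vertex_noncollinear; auto].
  destruct (Ceq_dec a w) as [->|Naw].
  - unfold tri_int. rewrite (seg_int_rev q b w) by (apply Ccont_seg_disc; auto).
    unfold seg_int at 1. replace (Cminus w w) with (RtoC 0) by ring. ring.
  - destruct (cross_eq0_parallel _ _ Hcr) as [t Ht].
    { intros E. apply Naw. transitivity (Cplus (Cminus a w) w); [ring|]. rewrite E. ring. }
    replace b with (line w a t) in * by (unfold line; rewrite <- Ht; ring).
    apply tri_int_vertex_collinear; auto.
Qed.

Lemma is_Cderiv_primitive z : Cmod z < rho -> is_Cderiv (fun x => seg_int q w x) z (q z).
Proof.
  intros Hz eps Heps.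
  destruct (q_cont z Hz (eps / 4) ltac:(lra)) as [d1 [Hd1 K1]].
  exists (Rmin d1 (rho - Cmod z)). split; [apply Rmin_pos; lra|].
  intros h Hh. pose proof (Rmin_l d1 (rho - Cmod z)). pose proof (Rmin_r d1 (rho - Cmod z)).
  assert (Hzh : Cmod (Cplus z h) < rho) by (pose proof (Cmod_triangle z h); lra).
  pose proof (tri_int_vertex z (Cplus z h) Hz Hzh) as T. unfold tri_int in T.
  rewrite (seg_int_rev q w (Cplus z h)) in T by (apply Ccont_seg_disc; auto).
  set (g := fun x => Cplus (q x) (Copp (q z))).
  assert (Hg : Ccont_seg g z (Cplus z h)).
  { intros s Hs. apply Ccont_plus; [apply Ccont_seg_disc; auto | apply Ccont_const]. }
  assert (Eg : seg_int q z (Cplus z h) = Cplus (seg_int g z (Cplus z h)) (Cmult (q z) h)).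
  { rewrite (seg_int_ext q (fun x => Cplus (g x) (q z))) by (intros; unfold g; ring).
    rewrite seg_int_plus, seg_int_const by (auto; intros s _; apply Ccont_const). f_equal. f_equal. ring. }
  assert (E : Cminus (Cminus (seg_int q w (Cplus z h)) (seg_int q w z)) (Cmult (q z) h) = seg_int g z (Cplus z h)).
  { transitivity (Cminus (Cminus (seg_int q z (Cplus z h)) (Cmult (q z) h))
      (Cplus (Cplus (seg_int q w z) (seg_int q z (Cplus z h))) (Copp (seg_int q w (Cplus z h))))); [ring|].
    rewrite T, Eg. ring. }
  rewrite E. eapply Rle_trans. apply (seg_int_bound g z (Cplus z h) (eps / 4)); auto.
  - intros s Hs. left. apply K1. unfold line.
    replace (Cminus (Cplus z (Cmult (RtoC s) (Cminus (Cplus z h) z))) z) with (Cmult (RtoC s) h) by ring.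
    rewrite Cmod_mult, Cmod_R, Rabs_right by lra. pose proof (Cmod_ge_0 h). nra.
  - replace (Cminus (Cplus z h) z) with h by ring. pose proof (Cmod_ge_0 h). nra.
Qed.

End VertexGoursat.

(** * Cauchy's integral formula and Taylor expansion *)

Definition circle (r th : R) : C := (r * cos th, r * sin th).
Definition circle' (r th : R) : C := (- (r * sin th), r * cos th).

Definition circ_int (g : C -> C) (r : R) : C :=
  CRInt (fun th => Cmult (g (circle r th)) (circle' r th)) 0 (2 * PI).

Lemma PI2_pos : 0 < 2 * PI.
Proof. pose proof PI_RGT_0. lra. Qed.

Lemma is_Rderiv_circle r th : is_Rderiv (circle r) th (circle' r th).
Proof. apply is_Rderiv_of_components; unfold circle, circle'; simpl; apply is_derive_Reals; auto_derive; auto; ring. Qed.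

Lemma Rcont_circle r th : Rcont (circle r) th.
Proof. eapply Rcont_of_is_Rderiv. apply is_Rderiv_circle. Qed.

Lemma Rcont_circle' r th : Rcont (circle' r) th.
Proof.
  eapply Rcont_of_is_Rderiv, (is_Rderiv_of_components _ _ (- (r * cos th), - (r * sin th)));
    unfold circle'; simpl; apply is_derive_Reals; auto_derive; auto; ring.
Qed.

Lemma circle'_eq r th : circle' r th = Cmult Ci (circle r th).
Proof. unfold circle', circle, Ci, Cmult; simpl. f_equal; ring. Qed.

Lemma Cmod_circle r th : 0 <= r -> Cmod (circle r th) = r.
Proof.
  intros Hr. unfold Cmod, circle; simpl.
  replace (r * cos th * (r * cos th * 1) + r * sin th * (r * sin th * 1)) with (r * r * (Rsqr (sin th) + Rsqr (cos th)))
    by (unfold Rsqr; ring).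
  rewrite sin2_cos2, Rmult_1_r. apply sqrt_square. auto.
Qed.

Lemma Cmod_circle' r th : 0 <= r -> Cmod (circle' r th) = r.
Proof. intros Hr. rewrite circle'_eq, Cmod_mult, Cmod_Ci, Cmod_circle by auto. ring. Qed.

Lemma circle_neq r th w : 0 <= r -> Cmod w < r -> circle r th <> w.
Proof. intros Hr Hw E. rewrite <- E, Cmod_circle in Hw by auto. lra. Qed.

Lemma circle_neq0 r th : 0 < r -> circle r th <> RtoC 0.
Proof. intros Hr. apply circle_neq; [lra|]. rewrite Cmod_0. auto. Qed.

Lemma circle_sub_neq0 r th w : Cmod w < r -> Cminus (circle r th) w <> RtoC 0.
Proof.
  intros Hw E. apply (circle_neq r th w); [pose proof (Cmod_ge_0 w); lra | auto |].
  transitivity (Cplus (Cminus (circle r th) w) w); [ring|]. rewrite E. ring.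
Qed.

Lemma Rcont_on_circ_int g r : (forall th, Ccont g (circle r th)) ->
  Rcont_on (fun th => Cmult (g (circle r th)) (circle' r th)) 0 (2 * PI).
Proof. intros H x _. apply Rcont_mult; [apply Rcont_comp; auto; apply Rcont_circle | apply Rcont_circle']. Qed.

Lemma circ_int_ext g1 g2 r : (forall th, g1 (circle r th) = g2 (circle r th)) -> circ_int g1 r = circ_int g2 r.
Proof. intros H. unfold circ_int. apply CRInt_ext. intros; rewrite H; auto. Qed.

Lemma circ_int_plus g1 g2 r : (forall th, Ccont g1 (circle r th)) -> (forall th, Ccont g2 (circle r th)) ->
  circ_int (fun z => Cplus (g1 z) (g2 z)) r = Cplus (circ_int g1 r) (circ_int g2 r).
Proof.
  intros H1 H2. unfold circ_int. rewrite <- CRInt_plus by (apply Rcont_on_circ_int; auto).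
  apply CRInt_ext. intros; ring.
Qed.

Lemma circ_int_cmul c g r : (forall th, Ccont g (circle r th)) ->
  circ_int (fun z => Cmult c (g z)) r = Cmult c (circ_int g r).
Proof.
  intros H. unfold circ_int. rewrite <- CRInt_cmul by (apply Rcont_on_circ_int; auto).
  apply CRInt_ext. intros; ring.
Qed.

Lemma circ_int_bound g r M : 0 <= r -> (forall th, Ccont g (circle r th)) ->
  (forall th, 0 <= th <= 2 * PI -> Cmod (g (circle r th)) <= M) ->
  Cmod (circ_int g r) <= 2 * (2 * PI) * (M * r).
Proof.
  intros Hr Hc HM. unfold circ_int. pose proof PI2_pos.
  replace (2 * (2 * PI) * (M * r)) with (2 * (2 * PI - 0) * (M * r)) by ring.
  apply CRInt_bound; [lra | apply Rcont_on_circ_int; auto |].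
  intros x Hx. rewrite Cmod_mult, Cmod_circle' by auto. apply Rmult_le_compat_r; auto.
Qed.

Lemma circ_int_exact F g r : (forall th, is_Cderiv F (circle r th) (g (circle r th))) ->
  (forall th, Ccont g (circle r th)) -> circ_int g r = RtoC 0.
Proof.
  intros HF Hg. unfold circ_int. pose proof PI2_pos.
  rewrite (CRInt_FTC (fun th => F (circle r th))).
  - replace (circle r (2 * PI)) with (circle r 0) by (unfold circle; rewrite cos_2PI, sin_2PI, cos_0, sin_0; auto).
    ring.
  - lra.
  - intros x _. apply is_Rderiv_comp; [apply HF | apply is_Rderiv_circle].
  - apply Rcont_on_circ_int; auto.
Qed.

Lemma circ_int_eq0 q rho w r : (forall x, Cmod x < rho -> Ccont q x) ->
  (forall x, Cmod x < rho -> x <> w -> exists d, is_Cderiv q x d) -> Cmod w < rho ->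
  0 <= r < rho -> circ_int q r = RtoC 0.
Proof.
  intros Hc Hd Hw Hr. apply (circ_int_exact (fun x => seg_int q w x)).
  - intros th. apply (is_Cderiv_primitive q rho w Hc Hd Hw). rewrite Cmod_circle; lra.
  - intros th. apply Hc. rewrite Cmod_circle; lra.
Qed.

Fixpoint pow_sum (a : nat -> C) (n : nat) (w : C) : C :=
  match n with O => RtoC 0 | S n => Cplus (pow_sum a n w) (Cmult (a n) (Cpow w n)) end.

Lemma pow_sum_scale (a : nat -> C) c N w : pow_sum (fun k => Cmult (a k) c) N w = Cmult (pow_sum a N w) c.
Proof. induction N; simpl; [ring|]. rewrite IHN. ring. Qed.

Lemma pow_sum_zero a n w : (forall k, (k < n)%nat -> a k = RtoC 0) -> pow_sum a n w = RtoC 0.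
Proof. induction n; intros H; simpl; auto. rewrite IHn, H by (auto; intros; apply H; lia). ring. Qed.

Lemma pow_sum_constant (a : nat -> C) w N :
  (forall k, (1 <= k)%nat -> a k = RtoC 0) -> (1 <= N)%nat -> pow_sum a N w = a O.
Proof.
  intros H HN. induction N; [lia|]. destruct N; [simpl; ring|].
  change (pow_sum a (S (S N)) w) with (Cplus (pow_sum a (S N) w) (Cmult (a (S N)) (Cpow w (S N)))).
  rewrite IHN, (H (S N)) by lia. ring.
Qed.

Lemma Ccont_pow_sum (b : nat -> C -> C) N w z : (forall k, Ccont (b k) z) ->
  Ccont (fun x => pow_sum (fun k => b k x) N w) z.
Proof.
  intros H. induction N; simpl; [apply Ccont_const|].
  apply Ccont_plus; auto. apply Ccont_mult; auto using Ccont_const.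
Qed.

Lemma geometric_expansion z w N : z <> RtoC 0 -> Cminus z w <> RtoC 0 ->
  Cinv (Cminus z w) = Cplus (pow_sum (fun k => Cpow (Cinv z) (S k)) N w)
                            (Cmult (Cpow (Cmult w (Cinv z)) N) (Cinv (Cminus z w))).
Proof.
  intros Hz Hzw. induction N; [simpl; ring|].
  rewrite IHN at 1. simpl. rewrite !Cpow_mult_l.
  set (X := Cpow w N). set (Y := Cpow (Cinv z) N). field. split; auto.
Qed.

Section CircleExpansion.

Variables (g : C -> C) (r : R).
Hypothesis r_pos : 0 < r.
Hypothesis g_cont : forall th, Ccont g (circle r th).

Lemma Ccont_inv_pow_circle k th : Ccont (fun z => Cpow (Cinv z) k) (circle r th).
Proof. apply Ccont_pow, Ccont_inv, circle_neq0; auto. Qed.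

Lemma circ_int_pow_sum N w :
  circ_int (fun z => Cmult (g z) (pow_sum (fun k => Cpow (Cinv z) (S k)) N w)) r =
  pow_sum (fun k => circ_int (fun z => Cmult (g z) (Cpow (Cinv z) (S k))) r) N w.
Proof.
  induction N.
  - simpl. rewrite (circ_int_ext _ (fun z => Cmult (RtoC 0) (g z))) by (intros; ring).
    rewrite circ_int_cmul by auto. ring.
  - cbn [pow_sum]. rewrite (circ_int_ext _ (fun z => Cplus (Cmult (g z) (pow_sum (fun k => Cpow (Cinv z) (S k)) N w))
                   (Cmult (Cpow w N) (Cmult (g z) (Cpow (Cinv z) (S N)))))) by (intros; simpl; ring).
    rewrite circ_int_plus, IHN, circ_int_cmul.
    + ring.
    + intros th. apply Ccont_mult; auto. apply Ccont_inv_pow_circle.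
    + intros th. apply Ccont_mult; auto. apply (Ccont_pow_sum (fun k z => Cpow (Cinv z) (S k))).
      intros k. apply Ccont_inv_pow_circle.
    + intros th. apply Ccont_cmul, Ccont_mult; auto. apply Ccont_inv_pow_circle.
Qed.

Definition circ_remainder N w :=
  circ_int (fun z => Cmult (g z) (Cmult (Cpow (Cmult w (Cinv z)) N) (Cinv (Cminus z w)))) r.

Lemma Ccont_remainder_integrand N w th : Cmod w < r ->
  Ccont (fun z => Cmult (g z) (Cmult (Cpow (Cmult w (Cinv z)) N) (Cinv (Cminus z w)))) (circle r th).
Proof.
  intros Hw. apply Ccont_mult; auto. apply Ccont_mult.
  - apply Ccont_pow, Ccont_cmul, Ccont_inv, circle_neq0; auto.
  - apply Ccont_inv_sub, circle_neq; auto; lra.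
Qed.

Lemma circ_int_expand w N : Cmod w < r ->
  circ_int (fun z => Cmult (g z) (Cinv (Cminus z w))) r =
  Cplus (pow_sum (fun k => circ_int (fun z => Cmult (g z) (Cpow (Cinv z) (S k))) r) N w) (circ_remainder N w).
Proof.
  intros Hw.
  rewrite (circ_int_ext _ (fun z => Cplus (Cmult (g z) (pow_sum (fun k => Cpow (Cinv z) (S k)) N w))
                                      (Cmult (g z) (Cmult (Cpow (Cmult w (Cinv z)) N) (Cinv (Cminus z w)))))).
  2:{ intros th. rewrite (geometric_expansion (circle r th) w N) at 1;
      auto using circle_neq0, circle_sub_neq0. ring. }
  rewrite circ_int_plus, circ_int_pow_sum; auto.
  - intros th. apply Ccont_mult; auto. apply (Ccont_pow_sum (fun k z => Cpow (Cinv z) (S k))).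
    intros k. apply Ccont_inv_pow_circle.
  - intros th. apply Ccont_remainder_integrand; auto.
Qed.

Lemma circ_remainder_bound w N M : Cmod w < r ->
  (forall th, 0 <= th <= 2 * PI -> Cmod (g (circle r th)) <= M) ->
  Cmod (circ_remainder N w) <= 2 * (2 * PI) * (M * ((Cmod w / r) ^ N / (r - Cmod w)) * r).
Proof.
  intros Hw HM. apply circ_int_bound; [lra | intros; apply Ccont_remainder_integrand; auto |].
  intros th Hth. pose proof (circle_neq0 r th r_pos) as Hz. pose proof (circle_sub_neq0 r th w Hw) as Hzw.
  rewrite !Cmod_mult, Cmod_pow, Cmod_mult, !Cmod_inv, Cmod_circle by (auto; lra).
  assert (Hlow : r - Cmod w <= Cmod (Cminus (circle r th) w)).
  { pose proof (Cmod_triangle (Cminus (circle r th) w) w) as T.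
    replace (Cplus (Cminus (circle r th) w) w) with (circle r th) in T by ring.
    rewrite Cmod_circle in T by lra. lra. }
  assert (/ Cmod (Cminus (circle r th) w) <= / (r - Cmod w)) by (apply Rinv_le_contravar; lra).
  pose proof (HM th Hth). pose proof (Cmod_ge_0 (g (circle r th))). pose proof (Cmod_ge_0 w).
  assert (0 <= (Cmod w * / r) ^ N) by (apply pow_le, Rmult_le_pos; [lra | left; apply Rinv_0_lt_compat; lra]).
  unfold Rdiv. apply Rmult_le_compat; auto.
  - apply Rmult_le_pos; auto. left; apply Rinv_0_lt_compat. lra.
  - apply Rmult_le_compat_l; auto.
Qed.

End CircleExpansion.

Lemma circ_int_inv r : 0 < r ->
  circ_int (fun z => Cmult (RtoC 1) (Cpow (Cinv z) 1)) r = Cmult (RtoC (2 * PI)) Ci.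
Proof.
  intros Hr. unfold circ_int. rewrite (CRInt_ext _ (fun _ => Ci)).
  - rewrite CRInt_const. f_equal. f_equal. ring.
  - intros th. rewrite circle'_eq. pose proof (circle_neq0 r th Hr). simpl. field. auto.
Qed.

Lemma circ_int_inv_pow r k : 0 < r ->
  circ_int (fun z => Cmult (RtoC 1) (Cpow (Cinv z) (S (S k)))) r = RtoC 0.
Proof.
  intros Hr.
  assert (Hn : RtoC (INR (S k)) <> RtoC 0).
  { intros E. apply RtoC_inj in E. pose proof (pos_INR k). rewrite S_INR in E. lra. }
  set (c := Copp (Cinv (RtoC (INR (S k))))).
  apply (circ_int_exact (fun z => Cmult c (Cpow (Cinv (Cminus z (RtoC 0))) (S k)))).
  - intros th. pose proof (circle_neq0 r th Hr) as Hz.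
    eapply is_Cderiv_ext_d. 2: apply is_Cderiv_cmul, is_Cderiv_pow, is_Cderiv_inv_sub; auto.
    unfold c. rewrite !Cpow_S.
    replace (Cminus (circle r th) (RtoC 0)) with (circle r th) by ring.
    set (X := Cpow (Cinv (circle r th)) k). field. auto.
  - intros th. apply Ccont_cmul, Ccont_inv_pow_circle; auto.
Qed.

Lemma circ_int_inv_sub r w : 0 < r -> Cmod w < r ->
  circ_int (fun z => Cinv (Cminus z w)) r = Cmult (RtoC (2 * PI)) Ci.
Proof.
  intros Hr Hw.
  rewrite (circ_int_ext _ (fun z => Cmult (RtoC 1) (Cinv (Cminus z w)))) by (intros; ring).
  set (I := circ_int (fun z => Cmult (RtoC 1) (Cinv (Cminus z w))) r).
  assert (Hc1 : forall th, Ccont (fun _ : C => RtoC 1) (circle r th)) by (intros; apply Ccont_const).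
  pose proof (Cmod_ge_0 w). pose proof PI2_pos.
  assert (Cmod (Cminus I (Cmult (RtoC (2 * PI)) Ci)) <= 0).
  { apply (Rle_0_of_geom _ (2 * (2 * PI) * (1 * (1 / (r - Cmod w)) * r)) (Cmod w / r)).
    - split; [apply Rdiv_le_0_compat; lra | apply Rlt_div_l; lra].
    - assert (0 < 1 / (r - Cmod w)) by (apply Rdiv_lt_0_compat; lra).
      apply Rmult_le_pos; [lra | apply Rmult_le_pos; lra].
    - intros N HN. unfold I. rewrite (circ_int_expand _ r Hr Hc1 w N Hw).
      rewrite pow_sum_constant; [| intros [|k] Hk; [lia | apply circ_int_inv_pow; auto] | auto].
      rewrite circ_int_inv by auto.
      replace (Cminus (Cplus (Cmult (RtoC (2 * PI)) Ci) (circ_remainder _ r N w)) (Cmult (RtoC (2 * PI)) Ci))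
        with (circ_remainder (fun _ => RtoC 1) r N w) by ring.
      eapply Rle_trans; [apply (circ_remainder_bound _ r Hr Hc1 w N 1 Hw); intros; rewrite Cmod_1; lra|].
      unfold Rdiv. right. ring. }
  assert (E : Cminus I (Cmult (RtoC (2 * PI)) Ci) = RtoC 0).
  { apply Cmod_eq_0. pose proof (Cmod_ge_0 (Cminus I (Cmult (RtoC (2 * PI)) Ci))). lra. }
  transitivity (Cplus (Cminus I (Cmult (RtoC (2 * PI)) Ci)) (Cmult (RtoC (2 * PI)) Ci)); [ring|].
  rewrite E. ring.
Qed.

Definition diff_quot (f : C -> C) (w dw z : C) : C :=
  if Ceq_dec z w then dw else Cmult (Cminus (f z) (f w)) (Cinv (Cminus z w)).

Lemma Ccont_diff_quot_at f w dw : is_Cderiv f w dw -> Ccont (diff_quot f w dw) w.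
Proof.
  intros Hdw eps Heps. destruct (Hdw (eps/2) ltac:(lra)) as [d [Hd K]].
  exists d. split; auto. intros y Hy. unfold diff_quot.
  destruct (Ceq_dec w w) as [_|NE]; [|congruence].
  destruct (Ceq_dec y w) as [Eyw|Nyw].
  - replace (Cminus dw dw) with (RtoC 0) by ring. rewrite Cmod_0. lra.
  - specialize (K (Cminus y w) Hy). replace (Cplus w (Cminus y w)) with y in K by ring.
    assert (Hyw : Cminus y w <> RtoC 0).
    { intros E. apply Nyw. transitivity (Cplus (Cminus y w) w); [ring|]. rewrite E. ring. }
    replace (Cminus (Cmult (Cminus (f y) (f w)) (Cinv (Cminus y w))) dw)
      with (Cmult (Cminus (Cminus (f y) (f w)) (Cmult dw (Cminus y w))) (Cinv (Cminus y w))) by (field; auto).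
    rewrite Cmod_mult, Cmod_inv by auto.
    assert (0 < Cmod (Cminus y w)) by (apply Cmod_gt_0; auto).
    apply Rlt_div_l; [lra|]. nra.
Qed.

Lemma is_Cderiv_diff_quot f w dw x d : x <> w -> is_Cderiv f x d ->
  exists d', is_Cderiv (diff_quot f w dw) x d'.
Proof.
  intros Hxw Hdx. eexists.
  apply (is_Cderiv_local _ (fun z => Cmult (Cplus (f z) (Copp (f w))) (Cinv (Cminus z w)))).
  - exists (Cmod (Cminus x w)). split.
    + apply Cmod_gt_0. intros E. apply Hxw. transitivity (Cplus (Cminus x w) w); [ring|]. rewrite E. ring.
    + intros y Hy. unfold diff_quot. destruct (Ceq_dec y w) as [->|E]; [|reflexivity].
      rewrite Cmod_sub_sym in Hy. lra.
  - apply is_Cderiv_mult.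
    + eapply is_Cderiv_ext_d; [|apply is_Cderiv_plus; [exact Hdx | apply is_Cderiv_const]]. reflexivity.
    + apply is_Cderiv_inv_sub; auto.
Qed.

Lemma cauchy_formula f rho r w : 0 < r < rho -> Cmod w < r ->
  (forall x, Cmod x < rho -> exists d, is_Cderiv f x d) ->
  circ_int (fun z => Cmult (f z) (Cinv (Cminus z w))) r = Cmult (f w) (Cmult (RtoC (2 * PI)) Ci).
Proof.
  intros Hr Hw Hf.
  destruct (Hf w ltac:(lra)) as [dw Hdw].
  set (q := diff_quot f w dw).
  assert (Hqd : forall x, Cmod x < rho -> x <> w -> exists d, is_Cderiv q x d).
  { intros x Hx Hxw. destruct (Hf x Hx) as [dx Hdx]. eapply is_Cderiv_diff_quot; eauto. }
  assert (Hqc : forall x, Cmod x < rho -> Ccont q x).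
  { intros x Hx. destruct (Ceq_dec x w) as [->|E]; [apply Ccont_diff_quot_at; auto|].
    destruct (Hqd x Hx E) as [d Hd]. eapply Ccont_of_is_Cderiv; eauto. }
  pose proof (circ_int_eq0 q rho w r Hqc Hqd ltac:(lra) ltac:(lra)) as C0.
  rewrite (circ_int_ext q (fun z => Cplus (Cmult (f z) (Cinv (Cminus z w))) (Cmult (Copp (f w)) (Cinv (Cminus z w))))) in C0.
  2:{ intros th. unfold q, diff_quot. destruct (Ceq_dec (circle r th) w) as [E|E]; [|ring].
      exfalso. apply (circle_neq r th w); auto; lra. }
  assert (Hfc : forall th, Ccont f (circle r th)).
  { intros th. destruct (Hf (circle r th)) as [d Hd]; [rewrite Cmod_circle; lra|]. eapply Ccont_of_is_Cderiv; eauto. }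
  assert (Hic : forall th, Ccont (fun z => Cinv (Cminus z w)) (circle r th))
    by (intros; apply Ccont_inv_sub, circle_neq; auto; lra).
  rewrite circ_int_plus in C0 by (intros; apply Ccont_mult; auto using Ccont_const).
  rewrite circ_int_cmul, circ_int_inv_sub in C0 by (auto; lra).
  transitivity (Cminus (Cplus (circ_int (fun z => Cmult (f z) (Cinv (Cminus z w))) r)
                              (Cmult (Copp (f w)) (Cmult (RtoC (2 * PI)) Ci)))
                       (Cmult (Copp (f w)) (Cmult (RtoC (2 * PI)) Ci))); [ring|].
  rewrite C0. ring.
Qed.

Lemma circle_bounded f r : (forall th, Ccont f (circle r th)) ->
  exists M, 0 <= M /\ forall th, 0 <= th <= 2 * PI -> Cmod (f (circle r th)) <= M.
Proof.
  intros Hfc.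
  destruct (continuity_ab_maj (fun th => Cmod (f (circle r th))) 0 (2 * PI)) as [Mx [HMx _]].
  { pose proof PI2_pos. lra. }
  { intros c _. intros eps Heps.
    destruct (Rcont_comp f (circle r) c (Hfc c) (Rcont_circle r c) eps Heps) as [d [Hd K]].
    exists d. split; auto. intros y [_ Hy]. simpl in *. unfold R_dist in *. specialize (K y Hy).
    pose proof (Cmod_triangle (Cminus (f (circle r y)) (f (circle r c))) (f (circle r c))) as T1.
    pose proof (Cmod_triangle (Cminus (f (circle r c)) (f (circle r y))) (f (circle r y))) as T2.
    replace (Cplus (Cminus (f (circle r y)) (f (circle r c))) (f (circle r c))) with (f (circle r y)) in T1 by ring.
    replace (Cplus (Cminus (f (circle r c)) (f (circle r y))) (f (circle r y))) with (f (circle r c)) in T2 by ring.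
    rewrite Cmod_sub_sym in T2. apply Rabs_def1; lra. }
  exists (Rmax (Cmod (f (circle r Mx))) 0). split; [apply Rmax_r|].
  intros th Hth. specialize (HMx th Hth). simpl in HMx. pose proof (Rmax_l (Cmod (f (circle r Mx))) 0). lra.
Qed.

Theorem holomorphic_taylor f rho : 0 < rho -> (forall x, Cmod x < rho -> exists d, is_Cderiv f x d) ->
  forall N, exists (a : nat -> C) K del, 0 < del /\
    forall w, Cmod w < del -> Cmod (Cminus (f w) (pow_sum a N w)) <= K * Cmod w ^ N.
Proof.
  intros Hrho Hf N.
  set (r := rho / 2). assert (Hr : 0 < r < rho) by (unfold r; lra).
  assert (Hfc : forall th, Ccont f (circle r th)).
  { intros th. destruct (Hf (circle r th)) as [d Hd]; [rewrite Cmod_circle; lra|]. eapply Ccont_of_is_Cderiv; eauto. }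
  destruct (circle_bounded f r Hfc) as [M [HM0 HM]].
  set (J := Cmult (RtoC (2 * PI)) Ci).
  assert (HJ : Cmod J = 2 * PI).
  { unfold J. rewrite Cmod_mult, Cmod_Ci, Cmod_R, Rabs_right by (pose proof PI2_pos; lra). ring. }
  assert (HJ0 : J <> RtoC 0) by (intros E; rewrite E, Cmod_0 in HJ; pose proof PI2_pos; lra).
  exists (fun k => Cmult (circ_int (fun z => Cmult (f z) (Cpow (Cinv z) (S k))) r) (Cinv J)).
  exists (4 * M / r ^ N), (r / 2). split; [lra|].
  intros w Hw. assert (Hw' : Cmod w < r) by lra.
  pose proof (cauchy_formula f rho r w Hr Hw' Hf) as CF. fold J in CF.
  rewrite (circ_int_expand f r ltac:(lra) Hfc w N Hw') in CF.
  rewrite pow_sum_scale.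
  set (P := pow_sum (fun k => circ_int (fun z => Cmult (f z) (Cpow (Cinv z) (S k))) r) N w) in *.
  assert (E : Cminus (f w) (Cmult P (Cinv J)) = Cmult (circ_remainder f r N w) (Cinv J)).
  { transitivity (Cmult (Cminus (Cmult (f w) J) P) (Cinv J)); [field; auto|]. rewrite <- CF. ring. }
  rewrite E, Cmod_mult, Cmod_inv, HJ by auto.
  pose proof (circ_remainder_bound f r ltac:(lra) Hfc w N M Hw' HM) as RB.
  pose proof PI2_pos. pose proof (Cmod_ge_0 w).
  assert (Hq : 0 <= (Cmod w / r) ^ N) by (apply pow_le; apply Rdiv_le_0_compat; lra).
  assert (Hinv : / (r - Cmod w) <= 2 / r).
  { replace (2 / r) with (/ (r / 2)) by (field; lra). apply Rinv_le_contravar; lra. }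
  assert (RB2 : Cmod (circ_remainder f r N w) <= 2 * (2 * PI) * (M * ((Cmod w / r) ^ N * (2 / r)) * r)).
  { eapply Rle_trans; [exact RB|]. unfold Rdiv at 2.
    apply Rmult_le_compat_l; [lra|]. apply Rmult_le_compat_r; [lra|].
    apply Rmult_le_compat_l; auto. apply Rmult_le_compat_l; auto. }
  replace (2 * (2 * PI) * (M * ((Cmod w / r) ^ N * (2 / r)) * r)) with (2 * PI * (4 * M / r ^ N * Cmod w ^ N)) in RB2.
  2:{ unfold Rdiv. rewrite Rpow_mult_distr, pow_inv. field. split; [lra|]. apply pow_nonzero; lra. }
  apply (Rmult_le_reg_l (2 * PI)); [lra|].
  replace (2 * PI * (Cmod (circ_remainder f r N w) * / (2 * PI))) with (Cmod (circ_remainder f r N w)) by (field; lra).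
  exact RB2.
Qed.

(** * Orders of vanishing of holomorphic germs *)

Definition bigO (f : C -> C) (N : nat) : Prop :=
  exists K del, 0 <= K /\ 0 < del /\ forall t, Cmod t < del -> Cmod (f t) <= K * Cmod t ^ N.

Definition lead_term (f : C -> C) (j : nat) (c : C) : Prop :=
  c <> RtoC 0 /\ bigO (fun t => Cminus (f t) (Cmult c (Cpow t j))) (S j).

Definition bounded_below_near0 (u : C -> R) (c0 : R) (L : nat) : Prop :=
  exists del, 0 < del /\ forall t, Cmod t < del -> c0 * Cmod t ^ L <= u t.

Definition holo_near0 (f : C -> C) : Prop :=
  exists rho, 0 < rho /\ forall x, Cmod x < rho -> exists d, is_Cderiv f x d.

Lemma pow_le_pow_of_le_1 x m n : 0 <= x <= 1 -> (m <= n)%nat -> x ^ n <= x ^ m.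
Proof. intros Hx Hmn. induction Hmn; [lra|]. simpl. pose proof (pow_le x m0 ltac:(lra)). nra. Qed.

Lemma bigO_mono f N M : bigO f N -> (M <= N)%nat -> bigO f M.
Proof.
  intros [K [d [HK [Hd H]]]] HMN. exists K, (Rmin d 1). split; auto. split; [apply Rmin_pos; lra|].
  intros t Ht. pose proof (Rmin_l d 1). pose proof (Rmin_r d 1). pose proof (Cmod_ge_0 t).
  eapply Rle_trans; [apply H; lra|]. apply Rmult_le_compat_l; auto. apply pow_le_pow_of_le_1; auto. lra.
Qed.

Lemma bigO_near f g N : (exists del, 0 < del /\ forall t, Cmod t < del -> f t = g t) -> bigO g N -> bigO f N.
Proof.
  intros [d [Hd E]] [K [d' [HK [Hd' H]]]]. exists K, (Rmin d d'). split; auto. split; [apply Rmin_pos; auto|].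
  intros t Ht. pose proof (Rmin_l d d'). pose proof (Rmin_r d d'). rewrite E by lra. apply H. lra.
Qed.

Lemma bigO_zero N : bigO (fun _ => RtoC 0) N.
Proof. exists 0, 1. split; [lra|]. split; [lra|]. intros. rewrite Cmod_0. lra. Qed.

Lemma bigO_plus f g N : bigO f N -> bigO g N -> bigO (fun t => Cplus (f t) (g t)) N.
Proof.
  intros [K1 [d1 [HK1 [Hd1 H1]]]] [K2 [d2 [HK2 [Hd2 H2]]]]. exists (K1 + K2), (Rmin d1 d2).
  split; [lra|]. split; [apply Rmin_pos; auto|].
  intros t Ht. pose proof (Rmin_l d1 d2). pose proof (Rmin_r d1 d2).
  specialize (H1 t ltac:(lra)). specialize (H2 t ltac:(lra)).
  eapply Rle_trans. apply Cmod_triangle. lra.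
Qed.

Lemma bigO_scale c f N : bigO f N -> bigO (fun t => Cmult c (f t)) N.
Proof.
  intros [K [d [HK [Hd H]]]]. pose proof (Cmod_ge_0 c).
  exists (Cmod c * K), d. split; [nra|]. split; auto.
  intros t Ht. rewrite Cmod_mult, Rmult_assoc. apply Rmult_le_compat_l; auto.
Qed.

Fixpoint abs_coef_sum (a : nat -> C) (n : nat) : R :=
  match n with O => 0 | S n => abs_coef_sum a n + Cmod (a n) end.

Lemma abs_coef_sum_ge_0 a n : 0 <= abs_coef_sum a n.
Proof. induction n; simpl; [lra|]. pose proof (Cmod_ge_0 (a n)). lra. Qed.

Lemma pow_sum_lowest_term a j n w : (j < n)%nat -> (forall k, (k < j)%nat -> a k = RtoC 0) -> Cmod w <= 1 ->
  Cmod (Cminus (pow_sum a n w) (Cmult (a j) (Cpow w j))) <= abs_coef_sum a n * Cmod w ^ (S j).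
Proof.
  intros Hjn Hz Hw. pose proof (Cmod_ge_0 w). induction n; [lia|].
  change (pow_sum a (S n) w) with (Cplus (pow_sum a n w) (Cmult (a n) (Cpow w n))).
  change (abs_coef_sum a (S n)) with (abs_coef_sum a n + Cmod (a n)).
  destruct (Nat.eq_dec j n) as [<-|E].
  - rewrite pow_sum_zero by auto.
    replace (Cminus (Cplus (RtoC 0) (Cmult (a j) (Cpow w j))) (Cmult (a j) (Cpow w j))) with (RtoC 0) by ring.
    rewrite Cmod_0. pose proof (abs_coef_sum_ge_0 a j). pose proof (Cmod_ge_0 (a j)).
    apply Rmult_le_pos; [lra | apply pow_le; lra].
  - specialize (IHn ltac:(lia)).
    replace (Cminus (Cplus (pow_sum a n w) (Cmult (a n) (Cpow w n))) (Cmult (a j) (Cpow w j)))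
      with (Cplus (Cminus (pow_sum a n w) (Cmult (a j) (Cpow w j))) (Cmult (a n) (Cpow w n))) by ring.
    eapply Rle_trans. apply Cmod_triangle. rewrite Cmod_mult, Cmod_pow.
    assert (Cmod w ^ n <= Cmod w ^ (S j)) by (apply pow_le_pow_of_le_1; [lra|lia]).
    pose proof (Cmod_ge_0 (a n)). nra.
Qed.

Lemma first_nonzero (a : nat -> C) N : (forall k, (k <= N)%nat -> a k = RtoC 0) \/
  exists j, (j <= N)%nat /\ a j <> RtoC 0 /\ forall k, (k < j)%nat -> a k = RtoC 0.
Proof.
  induction N.
  - destruct (Ceq_dec (a O) (RtoC 0)) as [E|E].
    + left. intros k Hk. replace k with O by lia. auto.
    + right. exists O. repeat split; auto. intros; lia.
  - destruct IHN as [H|[j [Hj [Hn Hk]]]].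
    + destruct (Ceq_dec (a (S N)) (RtoC 0)) as [E|E].
      * left. intros k Hk. destruct (Nat.eq_dec k (S N)) as [->|]; auto. apply H; lia.
      * right. exists (S N). repeat split; auto. intros k Hk. apply H; lia.
    + right. exists j. split; auto.
Qed.

Lemma bigO_or_lead_term f N : holo_near0 f -> bigO f (S N) \/ exists j c, (j <= N)%nat /\ lead_term f j c.
Proof.
  intros [rho [Hrho Hf]]. destruct (holomorphic_taylor f rho Hrho Hf (S N)) as [a [K [d [Hd H]]]].
  destruct (first_nonzero a N) as [Z|[j [Hj [Hn Hk]]]].
  - left. exists (Rabs K), d. split; [apply Rabs_pos|]. split; auto. intros t Ht. specialize (H t Ht).
    rewrite pow_sum_zero in H by (intros; apply Z; lia).
    replace (Cminus (f t) (RtoC 0)) with (f t) in H by ring.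
    eapply Rle_trans; [exact H|]. apply Rmult_le_compat_r; [apply pow_le, Cmod_ge_0 | apply Rle_abs].
  - right. exists j, (a j). split; auto. split; auto.
    exists (Rabs K + abs_coef_sum a (S N)), (Rmin d 1).
    split; [pose proof (abs_coef_sum_ge_0 a (S N)); pose proof (Rabs_pos K); lra|]. split; [apply Rmin_pos; lra|].
    intros t Ht. pose proof (Rmin_l d 1). pose proof (Rmin_r d 1). pose proof (Cmod_ge_0 t).
    specialize (H t ltac:(lra)).
    pose proof (pow_sum_lowest_term a j (S N) t ltac:(lia) Hk ltac:(lra)).
    replace (Cminus (f t) (Cmult (a j) (Cpow t j))) with
      (Cplus (Cminus (f t) (pow_sum a (S N) t)) (Cminus (pow_sum a (S N) t) (Cmult (a j) (Cpow t j)))) by ring.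
    eapply Rle_trans. apply Cmod_triangle.
    assert (Cmod t ^ S N <= Cmod t ^ S j) by (apply pow_le_pow_of_le_1; [lra|lia]).
    assert (K * Cmod t ^ S N <= Rabs K * Cmod t ^ S j).
    { eapply Rle_trans; [apply Rmult_le_compat_r; [apply pow_le; lra | apply Rle_abs]|].
      apply Rmult_le_compat_l; auto. apply Rabs_pos. }
    lra.
Qed.

Lemma lead_term_lower_bound f j c : lead_term f j c ->
  bounded_below_near0 (fun t => Cmod (f t)) (Cmod c / 2) j.
Proof.
  intros [Hc [K [d [HK [Hd H]]]]].
  assert (Hcp : 0 < Cmod c) by (apply Cmod_gt_0; auto).
  exists (Rmin d (Cmod c / (2 * (K + 1)))). split; [apply Rmin_pos; auto; apply Rdiv_lt_0_compat; lra|].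
  intros t Ht. pose proof (Rmin_l d (Cmod c / (2 * (K + 1)))). pose proof (Rmin_r d (Cmod c / (2 * (K + 1)))).
  specialize (H t ltac:(lra)). pose proof (Cmod_ge_0 t).
  pose proof (Cmod_triangle (f t) (Cminus (Cmult c (Cpow t j)) (f t))) as T.
  replace (Cplus (f t) (Cminus (Cmult c (Cpow t j)) (f t))) with (Cmult c (Cpow t j)) in T by ring.
  rewrite Cmod_mult, Cmod_pow, (Cmod_sub_sym (Cmult c (Cpow t j)) (f t)) in T.
  assert (HKt : K * Cmod t <= Cmod c / 2).
  { assert (Cmod t * (2 * (K + 1)) <= Cmod c) by (apply Rle_div_r; lra). nra. }
  pose proof (pow_le (Cmod t) j (Cmod_ge_0 t)).
  assert (K * Cmod t ^ S j <= Cmod c / 2 * Cmod t ^ j) by (simpl; rewrite <- Rmult_assoc; apply Rmult_le_compat_r; auto).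
  lra.
Qed.

Lemma lead_term_order_pos f j c : f (RtoC 0) = RtoC 0 -> lead_term f j c -> (1 <= j)%nat.
Proof.
  intros H0 [Hc [K [d [HK [Hd H]]]]]. destruct j; [|lia]. exfalso.
  specialize (H (RtoC 0) ltac:(rewrite Cmod_0; lra)). rewrite H0, Cmod_0 in H. simpl in H.
  rewrite Rmult_0_l, Rmult_0_r in H.
  replace (Cminus (RtoC 0) (Cmult c (RtoC 1))) with (Copp c) in H by ring. rewrite Cmod_opp in H.
  apply Hc, Cmod_eq_0. pose proof (Cmod_ge_0 c). lra.
Qed.

Lemma exists_small (d1 d2 d3 d4 : R) : 0 < d1 -> 0 < d2 -> 0 < d3 -> 0 < d4 ->
  exists s, 0 < s /\ s < 1 /\ s < d1 /\ s < d2 /\ s < d3 /\ s < d4.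
Proof.
  intros. exists (Rmin (Rmin 1 d1) (Rmin d2 (Rmin d3 d4)) / 2).
  pose proof (Rmin_l (Rmin 1 d1) (Rmin d2 (Rmin d3 d4))). pose proof (Rmin_r (Rmin 1 d1) (Rmin d2 (Rmin d3 d4))).
  pose proof (Rmin_l 1 d1). pose proof (Rmin_r 1 d1). pose proof (Rmin_l d2 (Rmin d3 d4)).
  pose proof (Rmin_r d2 (Rmin d3 d4)). pose proof (Rmin_l d3 d4). pose proof (Rmin_r d3 d4).
  assert (0 < Rmin (Rmin 1 d1) (Rmin d2 (Rmin d3 d4))) by (repeat apply Rmin_pos; lra).
  repeat split; lra.
Qed.

(* Along the ray through [t0], [Re w + p] is at least [s^j Re (c t0^j) + O(s^(j+1))],
   which would contradict vanishing to order [N > j] unless [Re (c t0^j) <= 0]. *)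
Lemma lead_term_re_nonpos (w : C -> C) (p : C -> R) j c N t0 :
  lead_term w j c -> (forall t, 0 <= p t) -> (j < N)%nat -> Cmod t0 = 1 ->
  ord_ge (fun t => fst (w t) + p t) N -> fst (Cmult c (Cpow t0 j)) <= 0.
Proof.
  intros [Hc [K1 [d1 [HK1 [Hd1 H1]]]]] Hp HN Ht0 [K [d [Hd H]]].
  set (al := fst (Cmult c (Cpow t0 j))).
  destruct (Rle_dec al 0) as [|Hal]; auto. exfalso.
  set (B := Rabs K + K1).
  assert (HB : 0 <= B) by (unfold B; pose proof (Rabs_pos K); lra).
  destruct (exists_small d d1 (al / (B + 1)) d) as [s [Hs [Hs1 [Hsd [Hsd1 [Hsal _]]]]]]; auto.
  { apply Rdiv_lt_0_compat; lra. }
  set (t := Cmult (RtoC s) t0).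
  assert (Hts : Cmod t = s) by (unfold t; rewrite Cmod_mult, Ht0, Cmod_R, Rabs_right by lra; ring).
  specialize (H t ltac:(change (Cnorm t) with (Cmod t); lra)). specialize (H1 t ltac:(lra)).
  change (Cnorm t) with (Cmod t) in H. rewrite Hts in H, H1.
  assert (Ep : fst (Cmult c (Cpow t j)) = s ^ j * al).
  { unfold t, al. rewrite Cpow_mult_l, <- RtoC_pow. unfold Cmult, RtoC; simpl. ring. }
  assert (F1 : fst (Cmult c (Cpow t j)) - fst (w t) <= K1 * s ^ S j).
  { pose proof (Cmod_fst (Cminus (w t) (Cmult c (Cpow t j)))) as H0.
    change (fst (Cminus (w t) (Cmult c (Cpow t j)))) with (fst (w t) - fst (Cmult c (Cpow t j))) in H0.
    pose proof (Rle_abs (- (fst (w t) - fst (Cmult c (Cpow t j))))) as H2. rewrite Rabs_Ropp in H2. lra. }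
  assert (F2 : fst (w t) <= Rabs K * s ^ N).
  { pose proof (Rle_abs (fst (w t) + p t)). pose proof (Hp t).
    assert (K * s ^ N <= Rabs K * s ^ N) by (apply Rmult_le_compat_r; [apply pow_le; lra|apply Rle_abs]). lra. }
  assert (Hsp : s ^ N <= s ^ S j) by (apply pow_le_pow_of_le_1; [lra|lia]).
  assert (F3 : s ^ j * al <= B * s ^ S j).
  { rewrite <- Ep. unfold B.
    assert (Rabs K * s ^ N <= Rabs K * s ^ S j) by (apply Rmult_le_compat_l; [apply Rabs_pos|auto]). lra. }
  simpl in F3. pose proof (pow_lt s j Hs).
  assert (al <= B * s) by (apply (Rmult_le_reg_l (s ^ j)); auto; lra).
  assert (s * (B + 1) < al) by (apply Rlt_div_r; lra).
  nra.
Qed.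

Definition expi (th : R) : C := (cos th, sin th).

Lemma expi_pow th n : Cpow (expi th) n = expi (INR n * th).
Proof.
  induction n.
  - simpl. unfold expi. rewrite Rmult_0_l, cos_0, sin_0. reflexivity.
  - rewrite Cpow_S, IHn, S_INR. unfold expi, Cmult; simpl.
    replace ((INR n + 1) * th) with (th + INR n * th) by ring.
    rewrite cos_plus, sin_plus. f_equal; ring.
Qed.

Lemma Cmod_expi th : Cmod (expi th) = 1.
Proof. pose proof (Cmod_circle 1 th ltac:(lra)) as H. unfold circle in H. rewrite !Rmult_1_l in H. exact H. Qed.

(* The real part of a nonconstant monomial takes both signs on the unit circle. *)
Lemma not_ord_ge_re_lead_plus_nonneg (w : C -> C) (p : C -> R) j c N :
  lead_term w j c -> (1 <= j)%nat -> (forall t, 0 <= p t) -> (j < N)%nat ->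
  ~ ord_ge (fun t => fst (w t) + p t) N.
Proof.
  intros Hl Hj Hp HN Hb.
  assert (HjR : 0 < INR j) by (apply lt_0_INR; lia).
  assert (D : forall th, fst (Cmult c (Cpow (expi th) j)) <= 0)
    by (intros; eapply lead_term_re_nonpos; eauto; apply Cmod_expi).
  pose proof (D 0) as D0. pose proof (D (PI / INR j)) as D1. pose proof (D (PI / 2 / INR j)) as D2.
  pose proof (D ((PI / 2 + PI) / INR j)) as D3.
  rewrite !expi_pow in D0, D1, D2, D3.
  replace (INR j * 0) with 0 in D0 by ring.
  replace (INR j * (PI / INR j)) with PI in D1 by (field; lra).
  replace (INR j * (PI / 2 / INR j)) with (PI / 2) in D2 by (field; lra).
  replace (INR j * ((PI / 2 + PI) / INR j)) with (PI / 2 + PI) in D3 by (field; lra).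
  unfold expi in *. rewrite cos_0, sin_0 in D0. rewrite cos_PI, sin_PI in D1. rewrite cos_PI2, sin_PI2 in D2.
  rewrite neg_cos, neg_sin, cos_PI2, sin_PI2 in D3.
  unfold Cmult in *; simpl in *.
  destruct Hl as [Hc _]. apply Hc. apply injective_projections; simpl; lra.
Qed.

Lemma not_ord_ge_of_lower_bound (w : C -> C) (p : C -> R) L N c0 :
  bigO w (S L) -> bounded_below_near0 p c0 L -> 0 < c0 -> (L < N)%nat -> ~ ord_ge (fun t => fst (w t) + p t) N.
Proof.
  intros [Kw [dw [HKw [Hdw Hw]]]] [dp [Hdp Hpl]] Hc0 HLN [K [d [Hd H]]].
  set (B := Rabs K + Kw).
  assert (HB : 0 <= B) by (unfold B; pose proof (Rabs_pos K); lra).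
  destruct (exists_small d dw dp (c0 / (B + 1))) as [s [Hs [Hs1 [Hsd [Hsdw [Hsdp Hsc]]]]]]; auto.
  { apply Rdiv_lt_0_compat; lra. }
  set (t := RtoC s).
  assert (Hts : Cmod t = s) by (unfold t; rewrite Cmod_R, Rabs_right by lra; auto).
  specialize (H t ltac:(change (Cnorm t) with (Cmod t); lra)). change (Cnorm t) with (Cmod t) in H.
  specialize (Hw t ltac:(lra)). specialize (Hpl t ltac:(lra)). rewrite Hts in *.
  pose proof (Cmod_fst (w t)). pose proof (Rle_abs (fst (w t) + p t)).
  pose proof (Rle_abs (- fst (w t))). rewrite Rabs_Ropp in *.
  assert (Hsp : s ^ N <= s ^ S L) by (apply pow_le_pow_of_le_1; [lra|lia]).
  assert (K * s ^ N <= Rabs K * s ^ S L).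
  { eapply Rle_trans; [apply Rmult_le_compat_r; [apply pow_le; lra | apply Rle_abs]|].
    apply Rmult_le_compat_l; auto. apply Rabs_pos. }
  assert (F : c0 * s ^ L <= B * s ^ S L) by (unfold B; lra).
  simpl in F. pose proof (pow_lt s L Hs).
  assert (c0 <= B * s) by (apply (Rmult_le_reg_l (s ^ L)); auto; lra).
  assert (s * (B + 1) < c0) by (apply Rlt_div_r; lra).
  nra.
Qed.

Lemma bigO_mult f g a b : bigO f a -> bigO g b -> bigO (fun t => Cmult (f t) (g t)) (a + b).
Proof.
  intros [K1 [d1 [HK1 [Hd1 H1]]]] [K2 [d2 [HK2 [Hd2 H2]]]]. exists (K1 * K2), (Rmin d1 d2).
  split; [nra|]. split; [apply Rmin_pos; auto|].
  intros t Ht. pose proof (Rmin_l d1 d2). pose proof (Rmin_r d1 d2).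
  specialize (H1 t ltac:(lra)). specialize (H2 t ltac:(lra)).
  rewrite Cmod_mult, pow_add.
  replace (K1 * K2 * (Cmod t ^ a * Cmod t ^ b)) with ((K1 * Cmod t ^ a) * (K2 * Cmod t ^ b)) by ring.
  apply Rmult_le_compat; auto using Cmod_ge_0.
Qed.

Lemma bounded_below_near0_mono u v c0 L :
  (exists del, 0 < del /\ forall t, Cmod t < del -> u t <= v t) ->
  bounded_below_near0 u c0 L -> bounded_below_near0 v c0 L.
Proof.
  intros [d [Hd Huv]] [d' [Hd' H]]. exists (Rmin d d'). split; [apply Rmin_pos; auto|].
  intros t Ht. pose proof (Rmin_l d d'). pose proof (Rmin_r d d').
  eapply Rle_trans; [apply H | apply Huv]; lra.
Qed.

Lemma bounded_below_near0_pow u c0 L n : 0 <= c0 ->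
  bounded_below_near0 u c0 L -> bounded_below_near0 (fun t => u t ^ n) (c0 ^ n) (n * L).
Proof.
  intros Hc [d [Hd H]]. exists d. split; auto. intros t Ht. specialize (H t Ht).
  rewrite Nat.mul_comm, pow_mult, <- Rpow_mult_distr.
  apply pow_incr. split; auto. apply Rmult_le_pos; auto. apply pow_le, Cmod_ge_0.
Qed.

Lemma bounded_below_near0_sub u f A L : 0 < A ->
  bounded_below_near0 u A L -> bigO f (S L) ->
  bounded_below_near0 (fun t => u t - Cmod (f t)) (A / 2) L.
Proof.
  intros HA [d [Hd Hu]] [K [d' [HK [Hd' Hf]]]].
  destruct (exists_small d d' (A / (2 * (K + 1))) d) as [s [Hs [Hs1 [Hsd [Hsd' [HsA _]]]]]]; auto.
  { apply Rdiv_lt_0_compat; lra. }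
  exists s. split; auto. intros t Ht. pose proof (Cmod_ge_0 t).
  specialize (Hu t ltac:(lra)). specialize (Hf t ltac:(lra)).
  assert (Cmod t * (2 * (K + 1)) <= A) by (apply Rle_div_r; lra).
  pose proof (pow_le (Cmod t) L ltac:(lra)).
  assert (K * Cmod t ^ S L <= A / 2 * Cmod t ^ L).
  { simpl. rewrite <- Rmult_assoc. apply Rmult_le_compat_r; auto. nra. }
  lra.
Qed.

(** * The hypersurface [Re z4 + |z1^3 - z3 z2|^2 + |z2|^4 = 0] *)

Definition g_ex (v : C4) : C := Cminus (Cpow (Defs.c1 v) 3) (Cmult (Defs.c3 v) (Defs.c2 v)).

Definition p_ex (v : C4) : R := Cmod (g_ex v) ^ 2 + Cmod (Defs.c2 v) ^ 4.

Lemma Cnorm2_eq x : Cnorm2 x = Cmod x ^ 2.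
Proof.
  unfold Cnorm2, Cmod. rewrite pow2_sqrt; [reflexivity|].
  pose proof (pow2_ge_0 (fst x)). pose proof (pow2_ge_0 (snd x)). lra.
Qed.

Lemma r_ex_split v : r_ex v = fst (Defs.c4 v) + p_ex v.
Proof. unfold r_ex, p_ex. rewrite !Cnorm2_eq, Rplus_assoc. do 2 f_equal. ring. Qed.

Lemma p_ex_ge_0 v : 0 <= p_ex v.
Proof. unfold p_ex. pose proof (pow2_ge_0 (Cmod (g_ex v))). pose proof (pow_le (Cmod (Defs.c2 v)) 4 (Cmod_ge_0 _)). lra. Qed.

Lemma Gamma0_holo_components z : Gamma0 z ->
  holo_near0 (fun t => Defs.c1 (z t)) /\ holo_near0 (fun t => Defs.c2 (z t)) /\
  holo_near0 (fun t => Defs.c3 (z t)) /\ holo_near0 (fun t => Defs.c4 (z t)).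
Proof.
  intros [[rho [Hrho H]] _].
  repeat split; exists rho; split; auto; intros x Hx; destruct (H x Hx) as [A [B [Cc D]]]; auto.
Qed.

Lemma Gamma0_c4_0 z : Gamma0 z -> Defs.c4 (z (RtoC 0)) = RtoC 0.
Proof. intros [_ [H _]]. change (RtoC 0) with C0. rewrite H. reflexivity. Qed.

Lemma ord_ge_weaken f g k N : ord_ge f k -> (N <= k)%nat -> (forall t, g t = f t) -> ord_ge g N.
Proof.
  intros [K0 [d [Hd Hf]]] HN E. exists (Rabs K0), (Rmin d 1). split; [apply Rmin_pos; lra|].
  intros t Ht. change (Cnorm t) with (Cmod t) in *. pose proof (Rmin_l d 1). pose proof (Rmin_r d 1).
  pose proof (Cmod_ge_0 t).
  rewrite E. eapply Rle_trans; [apply Hf; change (Cnorm t) with (Cmod t); lra|].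
  eapply Rle_trans; [apply Rmult_le_compat_r; [apply pow_le, Cmod_ge_0 | apply Rle_abs]|].
  apply Rmult_le_compat_l; [apply Rabs_pos|]. apply pow_le_pow_of_le_1; auto. lra.
Qed.

Lemma C4norm_ge v : Cmod (Defs.c1 v) <= C4norm v /\ Cmod (Defs.c2 v) <= C4norm v /\
  Cmod (Defs.c3 v) <= C4norm v /\ Cmod (Defs.c4 v) <= C4norm v.
Proof.
  unfold C4norm. change Cnorm with Cmod.
  pose proof (Cmod_ge_0 (Defs.c1 v)). pose proof (Cmod_ge_0 (Defs.c2 v)).
  pose proof (Cmod_ge_0 (Defs.c3 v)). pose proof (Cmod_ge_0 (Defs.c4 v)).
  repeat split; lra.
Qed.

Lemma vz_eq_bigO_c3 z m : vz_eq z m -> bigO (fun t => Defs.c3 (z t)) m.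
Proof.
  intros [[K [d [Hd H]]] _]. exists (Rabs K), d. split; [apply Rabs_pos|]. split; auto.
  intros t Ht. specialize (H t Ht). change (Cnorm t) with (Cmod t) in H.
  destruct (C4norm_ge (z t)) as [_ [_ [A _]]]. pose proof (Cmod_ge_0 (Defs.c3 (z t))).
  rewrite Rabs_right in H by lra.
  eapply Rle_trans; [|apply Rmult_le_compat_r; [apply pow_le, Cmod_ge_0 | apply Rle_abs]]. lra.
Qed.

Lemma vz_eq_not_all_bigO z m : vz_eq z m ->
  bigO (fun t => Defs.c1 (z t)) (S m) -> bigO (fun t => Defs.c2 (z t)) (S m) ->
  bigO (fun t => Defs.c3 (z t)) (S m) -> bigO (fun t => Defs.c4 (z t)) (S m) -> False.
Proof.
  intros [_ Hn] [K1 [d1 [HK1 [Hd1 H1]]]] [K2 [d2 [HK2 [Hd2 H2]]]] [K3 [d3 [HK3 [Hd3 H3]]]] [K4 [d4 [HK4 [Hd4 H4]]]].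
  apply Hn. exists (K1 + K2 + K3 + K4), (Rmin (Rmin d1 d2) (Rmin d3 d4)). split; [repeat apply Rmin_pos; auto|].
  intros t Ht. change (Cnorm t) with (Cmod t) in *.
  pose proof (Rmin_l (Rmin d1 d2) (Rmin d3 d4)). pose proof (Rmin_r (Rmin d1 d2) (Rmin d3 d4)).
  pose proof (Rmin_l d1 d2). pose proof (Rmin_r d1 d2). pose proof (Rmin_l d3 d4). pose proof (Rmin_r d3 d4).
  specialize (H1 t ltac:(lra)). specialize (H2 t ltac:(lra)). specialize (H3 t ltac:(lra)). specialize (H4 t ltac:(lra)).
  unfold C4norm. change Cnorm with Cmod.
  pose proof (Cmod_ge_0 (Defs.c1 (z t))). pose proof (Cmod_ge_0 (Defs.c2 (z t))).
  pose proof (Cmod_ge_0 (Defs.c3 (z t))). pose proof (Cmod_ge_0 (Defs.c4 (z t))).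
  rewrite Rabs_right by lra. lra.
Qed.

(* Since [p_ex >= 0], vanishing of [r_ex] to order [N+1] along a curve forces [z4] to vanish to
   that order (its leading term would make [Re z4] change sign), and forbids [p_ex] from being
   of any lower order. *)
Lemma r_ex_contact z k N : Gamma0 z -> ord_ge (fun t => r_ex (z t)) k -> (S N <= k)%nat ->
  bigO (fun t => Defs.c4 (z t)) (S N) /\
  forall L c0, 0 < c0 -> (L <= N)%nat -> ~ bounded_below_near0 (fun t => p_ex (z t)) c0 L.
Proof.
  intros HG Hk HN.
  destruct (Gamma0_holo_components z HG) as [_ [_ [_ H4]]].
  assert (Hr : ord_ge (fun t => fst (Defs.c4 (z t)) + p_ex (z t)) (S N))
    by (apply (ord_ge_weaken (fun t => r_ex (z t)) _ k); auto; intros; symmetry; apply r_ex_split).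
  destruct (bigO_or_lead_term _ N H4) as [B4 | [j [c [Hj Hl]]]].
  - split; auto. intros L c0 Hc0 HL Hlow.
    apply (not_ord_ge_of_lower_bound (fun t => Defs.c4 (z t)) (fun t => p_ex (z t)) L (S N) c0); auto; [|lia].
    apply (bigO_mono _ (S N)); auto. lia.
  - exfalso. apply (not_ord_ge_re_lead_plus_nonneg _ (fun t => p_ex (z t)) j c (S N) Hl); auto; [|intros; apply p_ex_ge_0|lia].
    apply (lead_term_order_pos (fun t => Defs.c4 (z t)) _ c); auto. apply Gamma0_c4_0; auto.
Qed.

Lemma p_ex_bounded_below_of_g z c0 L : 0 <= c0 ->
  bounded_below_near0 (fun t => Cmod (g_ex (z t))) c0 L ->
  bounded_below_near0 (fun t => p_ex (z t)) (c0 ^ 2) (2 * L).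
Proof.
  intros Hc H. apply (bounded_below_near0_mono (fun t => Cmod (g_ex (z t)) ^ 2)).
  - exists 1. split; [lra|]. intros t _. unfold p_ex. pose proof (pow_le (Cmod (Defs.c2 (z t))) 4 (Cmod_ge_0 _)). lra.
  - apply bounded_below_near0_pow; auto.
Qed.

Lemma p_ex_bounded_below_of_lead_c2 z j c : lead_term (fun t => Defs.c2 (z t)) j c ->
  bounded_below_near0 (fun t => p_ex (z t)) ((Cmod c / 2) ^ 4) (4 * j).
Proof.
  intros Hl. apply (bounded_below_near0_mono (fun t => Cmod (Defs.c2 (z t)) ^ 4)).
  - exists 1. split; [lra|]. intros t _. unfold p_ex. pose proof (pow2_ge_0 (Cmod (g_ex (z t)))). lra.
  - apply bounded_below_near0_pow; [pose proof (Cmod_ge_0 c); lra|]. apply lead_term_lower_bound; auto.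
Qed.

Lemma cube_bounded_below_of_lead f j c : lead_term f j c ->
  bounded_below_near0 (fun t => Cmod (Cpow (f t) 3)) ((Cmod c / 2) ^ 3) (3 * j).
Proof.
  intros Hl. apply (bounded_below_near0_mono (fun t => Cmod (f t) ^ 3)).
  - exists 1. split; [lra|]. intros t _. rewrite Cmod_pow. lra.
  - apply bounded_below_near0_pow; [pose proof (Cmod_ge_0 c); lra|]. apply lead_term_lower_bound; auto.
Qed.

Lemma lead_coef_pow_pos c n : c <> RtoC 0 -> 0 < (Cmod c / 2) ^ n.
Proof. intros H. apply pow_lt. pose proof (proj1 (Cmod_gt_0 c) H). lra. Qed.

(** * Upper bounds for the contact order *)

Definition e3 : C4 := mkC4 C0 C0 (1, 0) C0.

Lemma lin_e3 v : lin e3 v = Defs.c3 v.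
Proof.
  destruct v as [[a1 a2] [b1 b2] [d1 d2] [f1 f2]]. unfold lin, e3; simpl.
  unfold Defs.Cadd, Defs.Cmul, C0; simpl. f_equal; ring.
Qed.

Theorem contact_le_6_in_z3_hyperplane z m k : Gamma0 z -> in_hyp e3 z -> vz_eq z m ->
  ord_ge (fun t => r_ex (z t)) k -> (k <= 6 * m)%nat.
Proof.
  intros HG [dh [Hdh Eh]] Hv Hk. destruct (Nat.le_gt_cases k (6 * m)) as [|Hlt]; auto. exfalso.
  destruct (Gamma0_holo_components z HG) as [H1 [H2 _]].
  destruct (r_ex_contact z k (6 * m) HG Hk ltac:(lia)) as [B4 Hp].
  assert (Z3 : forall t, Cmod t < dh -> Defs.c3 (z t) = RtoC 0) by (intros t Ht; rewrite <- lin_e3; auto).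
  destruct (bigO_or_lead_term _ m H1) as [B1 | [j1 [c1 [Hj1 Hl1]]]].
  2:{ apply (Hp (2 * (3 * j1))%nat (((Cmod c1 / 2) ^ 3) ^ 2)); [apply pow_lt, lead_coef_pow_pos, Hl1 | lia |].
      apply p_ex_bounded_below_of_g; [pose proof (lead_coef_pow_pos c1 3 (proj1 Hl1)); lra|].
      apply (bounded_below_near0_mono (fun t => Cmod (Cpow (Defs.c1 (z t)) 3))).
      - exists dh. split; auto. intros t Ht. unfold g_ex. rewrite Z3 by auto.
        replace (Cminus (Cpow (Defs.c1 (z t)) 3) (Cmult (RtoC 0) (Defs.c2 (z t)))) with (Cpow (Defs.c1 (z t)) 3) by ring.
        lra.
      - apply cube_bounded_below_of_lead; auto. }
  destruct (bigO_or_lead_term _ m H2) as [B2 | [j2 [c2 [Hj2 Hl2]]]].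
  2:{ apply (Hp (4 * j2)%nat ((Cmod c2 / 2) ^ 4)); [apply lead_coef_pow_pos, Hl2 | lia |].
      apply p_ex_bounded_below_of_lead_c2; auto. }
  apply (vz_eq_not_all_bigO z m Hv B1 B2).
  - apply (bigO_near _ (fun _ => RtoC 0)); [exists dh; split; auto | apply bigO_zero].
  - apply (bigO_mono _ (S (6 * m))); auto. lia.
Qed.

Lemma solve_lin_for_third (a1 a2 a3 a4 x1 x2 x3 x4 : C) : a3 <> RtoC 0 ->
  Cplus (Cplus (Cmult a1 x1) (Cmult a2 x2)) (Cplus (Cmult a3 x3) (Cmult a4 x4)) = RtoC 0 ->
  x3 = Cmult (Copp (Cinv a3)) (Cplus (Cplus (Cmult a1 x1) (Cmult a2 x2)) (Cmult a4 x4)).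
Proof.
  intros H3 E.
  transitivity (Cplus (Cmult (Copp (Cinv a3)) (Cplus (Cplus (Cmult a1 x1) (Cmult a2 x2)) (Cmult a4 x4)))
                      (Cmult (Cinv a3) (Cplus (Cplus (Cmult a1 x1) (Cmult a2 x2)) (Cplus (Cmult a3 x3) (Cmult a4 x4))))).
  - field. auto.
  - rewrite E. ring.
Qed.


(* On [S_h] with [h3 <> 0], [z3] is a linear combination of [z1, z2, z4]; when [z2] and [z4]
   vanish to high order, [z3 z2] is negligible against [z1^3]. *)
Theorem contact_le_8_in_generic_hyperplane h z m k : Defs.c1 h <> RtoC 0 -> Defs.c3 h <> RtoC 0 ->
  Gamma0 z -> in_hyp h z -> vz_eq z m -> ord_ge (fun t => r_ex (z t)) k -> (k <= 8 * m)%nat.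
Proof.
  intros Hh1 Hh3 HG [dh [Hdh Eh]] Hv Hk. destruct (Nat.le_gt_cases k (8 * m)) as [|Hlt]; auto. exfalso.
  destruct (Gamma0_holo_components z HG) as [H1 [H2 _]].
  destruct (r_ex_contact z k (8 * m) HG Hk ltac:(lia)) as [B4 Hp].
  pose proof (vz_eq_bigO_c3 z m Hv) as U3.
  destruct (bigO_or_lead_term _ (2 * m) H2) as [B2 | [j2 [c2 [Hj2 Hl2]]]].
  2:{ apply (Hp (4 * j2)%nat ((Cmod c2 / 2) ^ 4)); [apply lead_coef_pow_pos, Hl2 | lia |].
      apply p_ex_bounded_below_of_lead_c2; auto. }
  destruct (bigO_or_lead_term _ m H1) as [B1 | [j1 [c1 [Hj1 Hl1]]]].
  2:{ set (A := (Cmod c1 / 2) ^ 3). assert (HA : 0 < A) by apply lead_coef_pow_pos, Hl1.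
      apply (Hp (2 * (3 * j1))%nat ((A / 2) ^ 2)); [apply pow_lt; lra | lia |].
      apply p_ex_bounded_below_of_g; [lra|].
      apply (bounded_below_near0_mono (fun t => Cmod (Cpow (Defs.c1 (z t)) 3) - Cmod (Cmult (Defs.c3 (z t)) (Defs.c2 (z t))))).
      - exists 1. split; [lra|]. intros t _. unfold g_ex.
        pose proof (Cmod_triangle (g_ex (z t)) (Cmult (Defs.c3 (z t)) (Defs.c2 (z t)))) as T.
        unfold g_ex in T. replace (Cplus (Cminus (Cpow (Defs.c1 (z t)) 3) (Cmult (Defs.c3 (z t)) (Defs.c2 (z t))))
                           (Cmult (Defs.c3 (z t)) (Defs.c2 (z t)))) with (Cpow (Defs.c1 (z t)) 3) in T by ring.
        lra.
      - apply (bounded_below_near0_sub _ (fun t => Cmult (Defs.c3 (z t)) (Defs.c2 (z t)))); auto.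
        + apply cube_bounded_below_of_lead; auto.
        + apply (bigO_mono _ (m + S (2 * m))); [apply bigO_mult; auto | lia]. }
  apply (vz_eq_not_all_bigO z m Hv B1).
  - apply (bigO_mono _ (S (2 * m))); auto. lia.
  - apply (bigO_near _ _ (S m) (ex_intro _ dh (conj Hdh (fun t Ht => solve_lin_for_third _ _ _ _ _ _ _ _ Hh3 (Eh t Ht))))).
    apply bigO_scale. repeat apply bigO_plus; apply bigO_scale.
    + exact B1.
    + apply (bigO_mono _ (S (2 * m))); auto; lia.
    + apply (bigO_mono _ (S (8 * m))); auto; lia.
  - apply (bigO_mono _ (S (8 * m))); auto. lia.
Qed.

(** * Curves of high contact *)

Definition quad (a b t : C) : C := Cplus (Cmult a t) (Cmult b (Cmult t t)).

Definition quad_curve (a b : C4) (t : C) : C4 :=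
  mkC4 (quad (Defs.c1 a) (Defs.c1 b) t) (quad (Defs.c2 a) (Defs.c2 b) t)
       (quad (Defs.c3 a) (Defs.c3 b) t) (quad (Defs.c4 a) (Defs.c4 b) t).

Lemma is_Cderiv_quad a b t : exists d, is_Cderiv (quad a b) t d.
Proof.
  eexists. apply is_Cderiv_plus; [apply is_Cderiv_cmul, is_Cderiv_id|].
  apply is_Cderiv_cmul, is_Cderiv_mult; apply is_Cderiv_id.
Qed.

Lemma Cmod_quad_bounds a b t :
  Cmod a * Cmod t - Cmod b * Cmod t ^ 2 <= Cmod (quad a b t) <= Cmod a * Cmod t + Cmod b * Cmod t ^ 2.
Proof.
  unfold quad. pose proof (Cmod_triangle (Cmult a t) (Cmult b (Cmult t t))).
  pose proof (Cmod_triangle (Cplus (Cmult a t) (Cmult b (Cmult t t))) (Copp (Cmult b (Cmult t t)))).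
  replace (Cplus (Cplus (Cmult a t) (Cmult b (Cmult t t))) (Copp (Cmult b (Cmult t t)))) with (Cmult a t) in * by ring.
  rewrite Cmod_opp, !Cmod_mult in *. simpl. lra.
Qed.

Lemma C4norm_quad_curve_bounds a b t :
  C4norm a * Cmod t - C4norm b * Cmod t ^ 2 <= C4norm (quad_curve a b t) <= C4norm a * Cmod t + C4norm b * Cmod t ^ 2.
Proof.
  unfold C4norm, quad_curve; simpl. change Cnorm with Cmod.
  pose proof (Cmod_quad_bounds (Defs.c1 a) (Defs.c1 b) t). pose proof (Cmod_quad_bounds (Defs.c2 a) (Defs.c2 b) t).
  pose proof (Cmod_quad_bounds (Defs.c3 a) (Defs.c3 b) t). pose proof (Cmod_quad_bounds (Defs.c4 a) (Defs.c4 b) t).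
  lra.
Qed.

Lemma C4norm_quad_curve_lower a b : 0 < C4norm a -> exists del, 0 < del /\
  forall t, Cmod t < del -> C4norm a / 2 * Cmod t <= C4norm (quad_curve a b t).
Proof.
  intros Ha. assert (Hb : 0 <= C4norm b) by (unfold C4norm; change Cnorm with Cmod;
    pose proof (Cmod_ge_0 (Defs.c1 b)); pose proof (Cmod_ge_0 (Defs.c2 b));
    pose proof (Cmod_ge_0 (Defs.c3 b)); pose proof (Cmod_ge_0 (Defs.c4 b)); lra).
  exists (C4norm a / (2 * (C4norm b + 1))). split; [apply Rdiv_lt_0_compat; lra|].
  intros t Ht. pose proof (C4norm_quad_curve_bounds a b t) as [H _]. pose proof (Cmod_ge_0 t).
  assert (Cmod t * (2 * (C4norm b + 1)) < C4norm a) by (apply Rlt_div_r; lra).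
  simpl in H. nra.
Qed.

Lemma Gamma0_quad_curve a b : 0 < C4norm a -> Gamma0 (quad_curve a b).
Proof.
  intros Ha. split; [|split].
  - exists 1. split; [lra|]. intros t _. unfold quad_curve; simpl. repeat split; apply is_Cderiv_quad.
  - unfold quad_curve, quad, C4zero, C0; simpl. f_equal; apply injective_projections; simpl; ring.
  - intros [d [Hd H]]. destruct (C4norm_quad_curve_lower a b Ha) as [d' [Hd' Hl]].
    set (s := Rmin d d' / 2). assert (Hs : 0 < s) by (apply Rdiv_lt_0_compat; [apply Rmin_pos|]; lra).
    assert (Hts : Cmod (RtoC s) = s) by (rewrite Cmod_R, Rabs_right; lra).
    assert (s < d /\ s < d') by (pose proof (Rmin_l d d'); pose proof (Rmin_r d d'); unfold s; lra).
    specialize (Hl (RtoC s) ltac:(lra)). rewrite (H (RtoC s)) in Hl by (change Cnorm with Cmod; lra).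
    replace (C4norm C4zero) with 0 in Hl
      by (unfold C4norm, C4zero; simpl; change Cnorm with Cmod; change C0 with (RtoC 0); rewrite Cmod_0; ring).
    rewrite Hts in Hl. nra.
Qed.

Lemma vz_eq_quad_curve a b : 0 < C4norm a -> vz_eq (quad_curve a b) 1.
Proof.
  intros Ha. destruct (C4norm_quad_curve_lower a b Ha) as [d [Hd Hl]].
  assert (Hb : 0 <= C4norm b) by (unfold C4norm; change Cnorm with Cmod;
    pose proof (Cmod_ge_0 (Defs.c1 b)); pose proof (Cmod_ge_0 (Defs.c2 b));
    pose proof (Cmod_ge_0 (Defs.c3 b)); pose proof (Cmod_ge_0 (Defs.c4 b)); lra).
  split.
  - exists (C4norm a + C4norm b), 1. split; [lra|]. intros t Ht. change Cnorm with Cmod in *.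
    pose proof (C4norm_quad_curve_bounds a b t) as [H1 H2]. pose proof (Cmod_ge_0 t).
    assert (0 <= C4norm (quad_curve a b t)) by (unfold C4norm; change Cnorm with Cmod;
      pose proof (Cmod_ge_0 (Defs.c1 (quad_curve a b t))); pose proof (Cmod_ge_0 (Defs.c2 (quad_curve a b t)));
      pose proof (Cmod_ge_0 (Defs.c3 (quad_curve a b t))); pose proof (Cmod_ge_0 (Defs.c4 (quad_curve a b t))); lra).
    rewrite Rabs_right by lra. replace (Cmod t ^ 1) with (Cmod t) by ring.
    assert (Cmod t ^ 2 <= Cmod t) by (simpl; nra). nra.
  - intros [K2 [d2 [Hd2 H]]].
    destruct (exists_small d d2 (C4norm a / (2 * (Rabs K2 + 1))) d) as [s [Hs [Hs1 [Hsd [Hsd2 [HsK _]]]]]]; auto.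
    { apply Rdiv_lt_0_compat; [lra|]. pose proof (Rabs_pos K2). lra. }
    assert (Hts : Cmod (RtoC s) = s) by (rewrite Cmod_R, Rabs_right; lra).
    specialize (Hl (RtoC s) ltac:(lra)). specialize (H (RtoC s) ltac:(change Cnorm with Cmod; lra)).
    change (Cnorm (RtoC s)) with (Cmod (RtoC s)) in H. rewrite Hts in *.
    pose proof (Rle_abs (C4norm (quad_curve a b (RtoC s)))).
    assert (K2 * s ^ 2 <= Rabs K2 * s ^ 2) by (apply Rmult_le_compat_r; [apply pow_le; lra | apply Rle_abs]).
    assert (s * (2 * (Rabs K2 + 1)) < C4norm a) by (apply Rlt_div_r; [pose proof (Rabs_pos K2); lra | lra]).
    replace (s ^ 2) with (s * s) in * by ring. pose proof (Rabs_pos K2). nra.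
Qed.

Lemma lin_eq h v : lin h v =
  Cplus (Cplus (Cmult (Defs.c1 h) (Defs.c1 v)) (Cmult (Defs.c2 h) (Defs.c2 v)))
        (Cplus (Cmult (Defs.c3 h) (Defs.c3 v)) (Cmult (Defs.c4 h) (Defs.c4 v))).
Proof. reflexivity. Qed.

Lemma lin_quad_curve h a b t : @eq C (lin h a) (RtoC 0) -> @eq C (lin h b) (RtoC 0) ->
  lin h (quad_curve a b t) = C0.
Proof.
  intros Ha Hb. change (@eq C (lin h (quad_curve a b t)) (RtoC 0)).
  transitivity (Cplus (Cmult t (lin h a)) (Cmult (Cmult t t) (lin h b))).
  - rewrite !lin_eq. unfold quad_curve, quad; simpl. ring.
  - rewrite Ha, Hb. ring.
Qed.


Lemma ord_ge_r_ex_of_monomials (z : C -> C4) k (G B : C) (a b : nat) :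
  (forall t, fst (Defs.c4 (z t)) = 0) -> (forall t, g_ex (z t) = Cmult G (Cpow t a)) ->
  (forall t, Defs.c2 (z t) = Cmult B (Cpow t b)) -> (k <= 2 * a)%nat -> (k <= 4 * b)%nat ->
  ord_ge (fun t => r_ex (z t)) k.
Proof.
  intros H4 Hg H2 Ha Hb. exists (Cmod G ^ 2 + Cmod B ^ 4), 1. split; [lra|].
  intros t Ht. change Cnorm with Cmod in *. rewrite r_ex_split, H4. unfold p_ex. rewrite Hg, H2.
  rewrite !Cmod_mult, !Cmod_pow, !Rpow_mult_distr, <- !pow_mult.
  pose proof (Cmod_ge_0 t).
  assert (Cmod t ^ (a * 2) <= Cmod t ^ k) by (apply pow_le_pow_of_le_1; [lra|lia]).
  assert (Cmod t ^ (b * 4) <= Cmod t ^ k) by (apply pow_le_pow_of_le_1; [lra|lia]).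
  assert (0 <= Cmod G ^ 2) by (apply pow_le, Cmod_ge_0). assert (0 <= Cmod B ^ 4) by (apply pow_le, Cmod_ge_0).
  assert (0 <= Cmod t ^ (a * 2)) by (apply pow_le; lra). assert (0 <= Cmod t ^ (b * 4)) by (apply pow_le; lra).
  rewrite Rplus_0_l, Rabs_right by nra. nra.
Qed.

Lemma Delta1_ge_of_quad_curve h a b k : 0 < C4norm a ->
  @eq C (lin h a) (RtoC 0) -> @eq C (lin h b) (RtoC 0) ->
  ord_ge (fun t => r_ex (quad_curve a b t)) k -> Delta1_ge r_ex (in_hyp h) (INR k).
Proof.
  intros Ha Hha Hhb Hk eps Heps. exists (quad_curve a b), 1%nat, k.
  refine (conj (Gamma0_quad_curve a b Ha) (conj _ (conj (vz_eq_quad_curve a b Ha) (conj Hk _)))).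
  - exists 1. split; [lra|]. intros t _. apply lin_quad_curve; auto.
  - simpl. replace (INR k / 1) with (INR k) by field. lra.
Qed.

Lemma Delta1_ge_6_of_direction h a1 a3 : 0 < Cmod a1 + Cmod a3 ->
  @eq C (Cplus (Cmult (Defs.c1 h) a1) (Cmult (Defs.c3 h) a3)) (RtoC 0) ->
  Delta1_ge r_ex (in_hyp h) 6.
Proof.
  intros Ha Hh. replace 6 with (INR 6) by (simpl; ring).
  set (zero := RtoC 0).
  apply (Delta1_ge_of_quad_curve h (mkC4 a1 zero a3 zero) (mkC4 zero zero zero zero)).
  - unfold C4norm; simpl. change Cnorm with Cmod. unfold zero. rewrite Cmod_0. lra.
  - rewrite lin_eq. simpl. rewrite <- Hh. unfold zero. ring.
  - rewrite lin_eq. simpl. unfold zero. ring.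
  - apply (ord_ge_r_ex_of_monomials _ 6 (Cpow a1 3) zero 3 2); try lia; intros t;
      unfold quad_curve, quad, g_ex, zero; simpl; [ring | |]; apply injective_projections; simpl; ring.
Qed.

Lemma Delta1_ge_6 h : Delta1_ge r_ex (in_hyp h) 6.
Proof.
  destruct (Ceq_dec (Defs.c1 h) (RtoC 0)) as [E|E].
  - apply (Delta1_ge_6_of_direction h (RtoC 1) (RtoC 0)).
    + rewrite Cmod_1, Cmod_0. lra.
    + rewrite E. ring.
  - apply (Delta1_ge_6_of_direction h (Copp (Defs.c3 h)) (Defs.c1 h)).
    + pose proof (Cmod_ge_0 (Copp (Defs.c3 h))). pose proof (proj1 (Cmod_gt_0 _) E). lra.
    + ring.
Qed.

(* The coefficients are chosen so that the curve lies in [S_h] and the [t^3] terms of [z1^3]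
   and [z3 z2] cancel, leaving [z1^3 - z3 z2] and [z2^2] of order 4. *)
Lemma Delta1_ge_8 h : Defs.c1 h <> RtoC 0 -> Defs.c3 h <> RtoC 0 -> Delta1_ge r_ex (in_hyp h) 8.
Proof.
  intros H1 H3. replace 8 with (INR 8) by (simpl; ring).
  set (h1 := Defs.c1 h). set (h2 := Defs.c2 h). set (h3 := Defs.c3 h). set (zero := RtoC 0).
  set (B := Copp (Cmult h1 (Cpow h3 3))). set (E := Cmult h2 (Cmult h1 (Cpow h3 2))).
  apply (Delta1_ge_of_quad_curve h (mkC4 (Cmult h1 h3) zero (Copp (Cmult h1 h1)) zero) (mkC4 zero B E zero)).
  - unfold C4norm; simpl. change Cnorm with Cmod. unfold zero. rewrite Cmod_0.
    pose proof (Cmod_ge_0 (Copp (Cmult h1 h1))). pose proof (proj1 (Cmod_gt_0 _) (Cmult_neq_0 h1 h3 H1 H3)). lra.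
  - rewrite lin_eq. simpl. unfold zero, h1, h3. ring.
  - rewrite lin_eq. simpl. unfold zero, B, E, h1, h2, h3. ring.
  - apply (ord_ge_r_ex_of_monomials _ 8 (Copp (Cmult E B)) B 4 2); try lia; intros t;
      unfold quad_curve, quad, g_ex, zero; simpl; [ring | |]; apply injective_projections; simpl; ring.
Qed.

Lemma Delta1_le_of_contact_bound inS (a : nat) eps : 0 <= eps ->
  (forall z m k, Gamma0 z -> inS z -> vz_eq z m -> ord_ge (fun t => r_ex (z t)) k -> (k <= a * m)%nat) ->
  Delta1_le r_ex inS (INR a + eps).
Proof.
  intros Heps H z m k HG Hh Hv Hk. pose proof (le_INR _ _ (H z m k HG Hh Hv Hk)) as Hle.
  rewrite mult_INR in Hle. pose proof (pos_INR m). nra.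
Qed.

Definition P_h1h3 : poly4 := cons ((1, 0) : Defs.C, (1%nat, 0%nat, 1%nat, 0%nat)) nil.

Lemma P_h1h3_eval h : poly4_eval P_h1h3 h = Cmult (Defs.c1 h) (Defs.c3 h).
Proof. apply injective_projections; unfold P_h1h3, poly4_eval, mono_eval; simpl; ring. Qed.

Theorem mainTheorem10 :
  Delta2_eq r_ex 6 /\ generic_Delta1_eq r_ex 8 /\ 6 < 8.
Proof.
  split; [|split; [|lra]].
  - split; [intros h _; apply Delta1_ge_6|].
    intros eps Heps. exists e3. split.
    + intros E. apply (f_equal Defs.c3) in E. injection E. lra.
    + replace (6 + eps) with (INR 6 + eps) by (simpl; ring).
      apply Delta1_le_of_contact_bound; [lra|]. apply contact_le_6_in_z3_hyperplane.
  - exists P_h1h3. split.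
    + exists (mkC4 (1, 0) (1, 0) (1, 0) (1, 0)). rewrite P_h1h3_eval. simpl. intros E. injection E. lra.
    + intros h _ HP. rewrite P_h1h3_eval in HP.
      assert (H1 : Defs.c1 h <> RtoC 0) by (intros E; apply HP; rewrite E; apply injective_projections; simpl; ring).
      assert (H3 : Defs.c3 h <> RtoC 0) by (intros E; apply HP; rewrite E; apply injective_projections; simpl; ring).
      split; [apply Delta1_ge_8; auto|].
      replace 8 with (INR 8 + 0) by (simpl; ring).
      apply Delta1_le_of_contact_bound; [lra|]. intros; eapply contact_le_8_in_generic_hyperplane; eauto.
Qed.
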